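(* Let $p=\alpha(\alpha+1)>2$, $c_p=\frac{1+z_p}{1-z_p}$, $a_p=h_{c_p}'(z_p)/L_\alpha'(z_p)$, and $$g_p(s)=\begin{cases}a_pL_\alpha(s),& s\in[z_p,1],\\ h_{c_p}(s),& s\in[-1,z_p].\end{cases}$$ Then $g_p$ is $C^1$ on $[-1,1]$, $g_p\ge h_{c_p}$, and for $s\in(-1,1)\setminus\{z_p\}$: $$Dg_p(s):=(1-s^2)g_p''-2sg_p'+pg_p\le0,\qquad \frac{Dg_p(s)}{1-s^2}+Kg_p(s)\le0,$$ where $Kg=p(p-1)g-2(p-1)sg'-(1-s^2)g''$. Consequently, the function $\phi(x,y)=(x+y)^p g_p\big(\frac{y-x}{x+y}\big)$ satisfies $\phi(x,y)\ge y^p-c_p^px^p$ for $x,y\ge0$, $(x,y)\ne(0,0)$, and for all $x,y>0$ with $\frac{y-x}{x+y}\ne z_p$ and all vectors $h,k\in\mathbb R^2$ with $|k|\le|h|$: $$\Big(\frac1x\phi_x+\phi_{xx}\Big)|h|^2+2\phi_{xy}\,(h\cdot k)+\Big(\phi_{yy}+\frac1y\phi_y\Big)|k|^2\le0 .$$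
   Context: $L_\alpha$ is the solution on $(-1,1)$ of $(1-s^2)y''-2sy'+\alpha(\alpha+1)y=0$ bounded near $1$ with $L_\alpha(1)=1$; $z_p$ is its largest zero in $(-1,1)$; $h_c(s)=\big(\frac{1+s}{2}\big)^p-c^p\big(\frac{1-s}{2}\big)^p$. *)

From Stdlib Require Import Reals Lra.
Open Scope R_scope.

(* real power x^y for x >= 0, with the convention 0^y = 0 (y > 0 throughout) *)
Definition pw (x y : R) : R := if Rle_dec x 0 then 0 else Rpower x y.

Definition hc (p c s : R) : R := pw ((1 + s) / 2) p - pw c p * pw ((1 - s) / 2) p.

Definition gp (p c a z : R) (L : R -> R) (s : R) : R :=
  if Rle_dec z s then a * L s else hc p c s.

Definition phi (p : R) (g : R -> R) (x y : R) : R := pw (x + y) p * g ((y - x) / (x + y)).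

Definition deriv_within (D : R -> Prop) (f : R -> R) (x l : R) : Prop :=
  forall eps, 0 < eps -> exists delta, 0 < delta /\
    forall y, D y -> y <> x -> Rabs (y - x) < delta ->
      Rabs ((f y - f x) / (y - x) - l) < eps.

Definition cont_within (D : R -> Prop) (f : R -> R) (x : R) : Prop :=
  forall eps, 0 < eps -> exists delta, 0 < delta /\
    forall y, D y -> Rabs (y - x) < delta -> Rabs (f y - f x) < eps.

Definition C1_on (a b : R) (f : R -> R) : Prop :=
  exists f1 : R -> R,
    (forall x, a <= x <= b -> deriv_within (fun y => a <= y <= b) f x (f1 x)) /\
    (forall x, a <= x <= b -> cont_within (fun y => a <= y <= b) f1 x).

Definition twice_deriv_at (f : R -> R) (x d1 d2 : R) : Prop :=
  exists (f1 : R -> R) (delta : R), 0 < delta /\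
    (forall y, Rabs (y - x) < delta -> derivable_pt_lim f y (f1 y)) /\
    f1 x = d1 /\ derivable_pt_lim f1 x d2.

Definition Dop (p s g0 d1 d2 : R) : R := (1 - s ^ 2) * d2 - 2 * s * d1 + p * g0.
Definition Kop (p s g0 d1 d2 : R) : R :=
  p * (p - 1) * g0 - 2 * (p - 1) * s * d1 - (1 - s ^ 2) * d2.

Definition second_partials (F : R -> R -> R) (x y fx fy fxx fxy fyy : R) : Prop :=
  exists (px py : R -> R -> R) (delta : R), 0 < delta /\
    (forall a b, Rabs (a - x) < delta -> Rabs (b - y) < delta ->
       derivable_pt_lim (fun t => F t b) a (px a b) /\
       derivable_pt_lim (fun t => F a t) b (py a b)) /\
    px x y = fx /\ py x y = fy /\
    derivable_pt_lim (fun t => px t y) x fxx /\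
    derivable_pt_lim (fun t => px x t) y fxy /\
    derivable_pt_lim (fun t => py x t) y fyy.

From Stdlib Require Import Reals Lra Psatz.
Open Scope R_scope.

(* On [[z, 1]], [g = a L] satisfies [D g = 0], and [K g <= 0] reduces to [p L - 2 s L' < 0], which follows
   from [((1 - s^2) (p L - 2 s L'))' = (p - 2) (1 - s^2) L' > 0] by integrating back from [s = 1].  On
   [[-1, z]], [g = h_c] satisfies [K h_c = 0] identically, while [D h_c] has the sign of
   [((1 + s) / (1 - s))^(p - 2) - c^p], which is nonpositive for [s <= z] because [c = (1 + z) / (1 - z) >= 1]
   (here [z > 0]).  The choice of [a] makes [g] of class [C^1] at [z].
   The inequality [a L >= h_c] on [[z, 1]] is a Sturm comparison: [W = (1 - s^2) (h_c' L - h_c L')] satisfies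
   [W' = (D h_c) L], vanishes at [z] and at [1], and is monotone on each side of the single sign change of
   [D h_c], hence [W <= 0]; thus [(a L - h_c) / L] is nondecreasing on [(z, 1)] and tends to [0] at [z].
   Finally [phi(x, y) = (x + y)^p g((y - x) / (x + y))] is [p]-homogeneous, and in the variable
   [s = (y - x) / (x + y)] the quadratic form equals [(x + y)^(p - 2) (K g |h + k|^2 + X |h|^2 + Y |k|^2)]
   with [X = 2 D g / (1 - s) - 2 p g' <= 0] and [X + Y <= 0]. *)

Lemma Rabs_le_inv x a : Rabs x <= a -> - a <= x <= a.
Proof. unfold Rabs; destruct (Rcase_abs x); lra. Qed.

Lemma Rabs_mult_lt_bound a b K e :
  0 <= K -> 0 < e -> Rabs a <= K -> Rabs b < e / (K + 1) -> Rabs (a * b) < e.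
Proof.
  intros HK He Ha Hb. rewrite Rabs_mult.
  assert (Hq : (K + 1) * (e / (K + 1)) = e) by (field; lra).
  pose proof (Rabs_pos a); pose proof (Rabs_pos b). nra.
Qed.

(* The Stdlib rules for [derivable_pt_lim], restated for functions written as lambdas so that [apply]
   can unify them with the goal. *)

Lemma dpl_eq f x l l' : derivable_pt_lim f x l -> l = l' -> derivable_pt_lim f x l'.
Proof. now intros H <-. Qed.

Lemma dpl_const k x : derivable_pt_lim (fun _ => k) x 0.
Proof. apply derivable_pt_lim_const. Qed.

Lemma dpl_id x : derivable_pt_lim (fun y => y) x 1.
Proof. apply derivable_pt_lim_id. Qed.

Lemma dpl_plus f g x l1 l2 : derivable_pt_lim f x l1 -> derivable_pt_lim g x l2 ->
  derivable_pt_lim (fun y => f y + g y) x (l1 + l2).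
Proof. apply (derivable_pt_lim_plus f g). Qed.

Lemma dpl_minus f g x l1 l2 : derivable_pt_lim f x l1 -> derivable_pt_lim g x l2 ->
  derivable_pt_lim (fun y => f y - g y) x (l1 - l2).
Proof. apply (derivable_pt_lim_minus f g). Qed.

Lemma dpl_opp f x l : derivable_pt_lim f x l -> derivable_pt_lim (fun y => - f y) x (- l).
Proof. apply (derivable_pt_lim_opp f). Qed.

Lemma dpl_mult f g x l1 l2 : derivable_pt_lim f x l1 -> derivable_pt_lim g x l2 ->
  derivable_pt_lim (fun y => f y * g y) x (l1 * g x + f x * l2).
Proof. apply (derivable_pt_lim_mult f g). Qed.

Lemma dpl_scal k f x l : derivable_pt_lim f x l ->
  derivable_pt_lim (fun y => k * f y) x (k * l).
Proof. intros H; eapply dpl_eq; [apply (dpl_mult (fun _ => k) f), H; apply dpl_const | ring]. Qed.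

Lemma dpl_comp f g x l1 l2 : derivable_pt_lim g x l1 -> derivable_pt_lim f (g x) l2 ->
  derivable_pt_lim (fun y => f (g y)) x (l2 * l1).
Proof. apply (derivable_pt_lim_comp g f). Qed.

Lemma dpl_div f g x l1 l2 : derivable_pt_lim f x l1 -> derivable_pt_lim g x l2 -> g x <> 0 ->
  derivable_pt_lim (fun y => f y / g y) x ((l1 * g x - l2 * f x) / (g x) ^ 2).
Proof.
  intros Hf Hg Hx. rewrite <- Rsqr_pow2. apply (derivable_pt_lim_div f g); auto.
Qed.

Lemma dpl_sqr x : derivable_pt_lim (fun y => y ^ 2) x (2 * x).
Proof. eapply dpl_eq; [apply (derivable_pt_lim_pow x 2) | simpl; ring]. Qed.

Lemma dpl_1_minus_sqr x : derivable_pt_lim (fun y => 1 - y ^ 2) x (- 2 * x).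
Proof. eapply dpl_eq; [apply dpl_minus; [apply dpl_const | apply dpl_sqr] | ring]. Qed.

Lemma dpl_local f g x l d : 0 < d -> (forall y, Rabs (y - x) < d -> f y = g y) ->
  derivable_pt_lim f x l -> derivable_pt_lim g x l.
Proof.
  intros Hd Hfg H eps He. destruct (H eps He) as [del Hdel].
  assert (Hm : 0 < Rmin del d) by (apply Rmin_pos; [apply cond_pos | lra]).
  exists (mkposreal _ Hm). intros h Hh Hlt. simpl in Hlt.
  pose proof (Rmin_l del d); pose proof (Rmin_r del d).
  rewrite <- (Hfg (x + h)), <- (Hfg x).
  - apply Hdel; auto; lra.
  - rewrite Rminus_diag, Rabs_R0; lra.
  - replace (x + h - x) with h by ring; lra.
Qed.

Lemma dpl_continuous f x l : derivable_pt_lim f x l -> forall eps, 0 < eps ->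
  exists d, 0 < d /\ forall y, Rabs (y - x) < d -> Rabs (f y - f x) < eps.
Proof.
  intros H eps He.
  assert (Hc : continuity_pt f x) by (apply derivable_continuous_pt; now exists l).
  destruct (Hc eps He) as [a [Ha Hd]]. exists a; split; auto. intros y Hy.
  destruct (Req_dec y x) as [->|Hne].
  - rewrite Rminus_diag, Rabs_R0; lra.
  - apply (Hd y). split; [split; [exact I | auto] | exact Hy].
Qed.

(** * Limits at [1] from the left *)

Definition tends0_at1 (F : R -> R) : Prop := forall eps, 0 < eps -> exists d, 0 < d /\
  forall t, 1 - d < t < 1 -> Rabs (F t) < eps.

Lemma tends0_at1_plus F G : tends0_at1 F -> tends0_at1 G -> tends0_at1 (fun s => F s + G s).
Proof.
  intros HF HG eps He.
  destruct (HF (eps / 2)) as [d1 [H1 H1']]; [lra|].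
  destruct (HG (eps / 2)) as [d2 [H2 H2']]; [lra|].
  exists (Rmin d1 d2). split; [apply Rmin_pos; lra|]. intros t Ht.
  pose proof (Rmin_l d1 d2); pose proof (Rmin_r d1 d2).
  eapply Rle_lt_trans; [apply Rabs_triang|].
  assert (Rabs (F t) < eps / 2) by (apply H1'; lra).
  assert (Rabs (G t) < eps / 2) by (apply H2'; lra). lra.
Qed.

Lemma tends0_at1_bounded_mult a F K d : 0 < d ->
  (forall s, 1 - d < s < 1 -> Rabs (a s) <= K) ->
  tends0_at1 F -> tends0_at1 (fun s => a s * F s).
Proof.
  intros Hd Ha HF eps He.
  assert (HK : 0 <= K) by (pose proof (Rabs_pos (a (1 - d / 2))); specialize (Ha (1 - d / 2)); lra).
  destruct (HF (eps / (K + 1))) as [d1 [H1 H1']]; [apply Rdiv_lt_0_compat; lra|].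
  exists (Rmin d d1). split; [apply Rmin_pos; lra|]. intros t Ht.
  pose proof (Rmin_l d d1); pose proof (Rmin_r d d1).
  apply Rabs_mult_lt_bound with K; auto; [apply Ha | apply H1']; lra.
Qed.

Lemma tends0_at1_ext F G : tends0_at1 F -> (forall s, 0 < s < 1 -> F s = G s) -> tends0_at1 G.
Proof.
  intros HF Hfg eps He. destruct (HF eps He) as [d [Hd Hd']].
  exists (Rmin d 1). split; [apply Rmin_pos; lra|]. intros t Ht.
  pose proof (Rmin_l d 1); pose proof (Rmin_r d 1).
  rewrite <- Hfg by lra. apply Hd'; lra.
Qed.

Lemma tends0_at1_1_minus_sqr : tends0_at1 (fun s => 1 - s ^ 2).
Proof.
  intros eps He. exists (Rmin 1 (eps / 2)). split; [apply Rmin_pos; lra|]. intros t Ht.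
  pose proof (Rmin_l 1 (eps / 2)); pose proof (Rmin_r 1 (eps / 2)).
  apply Rabs_def1; nra.
Qed.

Lemma nonneg_of_nonincreasing_tends0 F F' s : s < 1 ->
  (forall t, s <= t < 1 -> derivable_pt_lim F t (F' t)) ->
  (forall t, s < t < 1 -> F' t <= 0) -> tends0_at1 F -> 0 <= F s.
Proof.
  intros Hs Hd Hneg Ht. destruct (Rle_or_lt 0 (F s)) as [|Hlt]; auto. exfalso.
  destruct (Ht (- F s)) as [d [Hd0 Hdd]]; [lra|].
  set (t := (Rmax s (1 - d) + 1) / 2).
  pose proof (Rmax_l s (1 - d)); pose proof (Rmax_r s (1 - d)).
  assert (Rmax s (1 - d) < 1) by (apply Rmax_lub_lt; lra).
  destruct (MVT_cor2 F F' s t) as [c [Hc Hcb]]; [unfold t; lra | intros c Hc; apply Hd; unfold t in *; lra|].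
  assert (F' c <= 0) by (apply Hneg; unfold t in *; lra).
  assert (Hft : Rabs (F t) < - F s) by (apply Hdd; unfold t in *; lra).
  apply Rabs_def2 in Hft. assert (0 < t - s) by (unfold t; lra). nra.
Qed.

Lemma pos_of_decreasing_tends0 F F' s : s < 1 ->
  (forall t, s <= t < 1 -> derivable_pt_lim F t (F' t)) ->
  (forall t, s < t < 1 -> F' t < 0) -> tends0_at1 F -> 0 < F s.
Proof.
  intros Hs Hd Hneg Ht. set (t := (s + 1) / 2).
  assert (0 <= F t).
  { apply (nonneg_of_nonincreasing_tends0 F F'); auto; unfold t in *; [lra | |].
    - intros; apply Hd; lra.
    - intros; left; apply Hneg; lra. }
  destruct (MVT_cor2 F F' s t) as [c [Hc Hcb]]; [unfold t; lra | intros c Hc; apply Hd; unfold t in *; lra|].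
  assert (F' c < 0) by (apply Hneg; unfold t in *; lra).
  assert (0 < t - s) by (unfold t; lra). nra.
Qed.

(* Mean value theorem on [[y, t]], then [t -> 1]. *)
Lemma expansion_at1_bound f f1 v l e d y : 0 < d -> 0 <= e ->
  (forall x, 1 - d < x < 1 -> derivable_pt_lim f x (f1 x)) ->
  (forall x, 1 - d < x < 1 -> Rabs (f1 x - l) <= e) ->
  tends0_at1 (fun t => f t - v) -> 1 - d < y < 1 ->
  Rabs (v - f y - l * (1 - y)) <= e * (1 - y).
Proof.
  intros Hd He Hder Hf1 Ht Hy. apply Rle_plus_epsilon. intros zeta Hz.
  destruct (Ht (zeta / 2)) as [d2 [Hd2 Hd2']]; [lra|].
  set (w := zeta / (2 * (Rabs l + 1))).
  assert (Hl0 : 0 <= Rabs l) by apply Rabs_pos.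
  assert (Hw : 0 < w) by (apply Rdiv_lt_0_compat; lra).
  set (t := (Rmax (Rmax y (1 - d2)) (1 - w) + 1) / 2).
  pose proof (Rmax_l (Rmax y (1 - d2)) (1 - w)); pose proof (Rmax_r (Rmax y (1 - d2)) (1 - w)).
  pose proof (Rmax_l y (1 - d2)); pose proof (Rmax_r y (1 - d2)).
  assert (Rmax (Rmax y (1 - d2)) (1 - w) < 1) by (repeat apply Rmax_lub_lt; lra).
  destruct (MVT_cor2 f f1 y t) as [c [Hc Hc2]]; [unfold t; lra | intros c Hc; apply Hder; unfold t in *; lra|].
  assert (A1 : Rabs (f t - v) < zeta / 2) by (apply Hd2'; unfold t; lra).
  assert (A2 : Rabs (f1 c - l) <= e) by (apply Hf1; unfold t in *; lra).
  assert (A3 : Rabs l * (1 - t) <= zeta / 2).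
  { assert (Hq : (Rabs l + 1) * w = zeta / 2) by (unfold w; field; lra).
    assert (1 - t <= w) by (unfold t; lra). assert (0 <= 1 - t) by (unfold t; lra). nra. }
  apply Rabs_def2 in A1. apply Rabs_le_inv in A2.
  assert (0 <= t - y) by (unfold t; lra). assert (t - y <= 1 - y) by (unfold t; lra).
  assert (Hft : f y = f t - f1 c * (t - y)) by lra. rewrite Hft.
  assert (Hl : Rabs (l * (1 - t)) <= zeta / 2) by (rewrite Rabs_mult, (Rabs_right (1 - t)); unfold t in *; lra).
  apply Rabs_le_inv in Hl.
  apply Rabs_le. split; nra.
Qed.

Lemma deriv_within_of_dpl (D : R -> Prop) f x l : derivable_pt_lim f x l -> deriv_within D f x l.
Proof.
  intros H eps He. destruct (H eps He) as [d Hd]. exists d. split; [apply cond_pos|].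
  intros y Dy Hyx Hy. specialize (Hd (y - x)). replace (x + (y - x)) with y in Hd by ring.
  apply Hd; auto. lra.
Qed.

Lemma cont_within_of_dpl (D : R -> Prop) f x l : derivable_pt_lim f x l -> cont_within D f x.
Proof.
  intros H eps He. destruct (dpl_continuous f x l H eps He) as [d [Hd Hd']]. exists d; auto.
Qed.

Lemma deriv_within_local (D : R -> Prop) f g x l d : 0 < d -> D x ->
  (forall y, D y -> Rabs (y - x) < d -> f y = g y) -> deriv_within D f x l -> deriv_within D g x l.
Proof.
  intros Hd Dx Hfg H eps He. destruct (H eps He) as [d1 [Hd1 Hd1']].
  exists (Rmin d d1). pose proof (Rmin_l d d1); pose proof (Rmin_r d d1).
  split; [apply Rmin_pos; lra|]. intros y Dy Hyx Hy.
  rewrite <- !Hfg; auto; [apply Hd1'; auto; lra | rewrite Rminus_diag, Rabs_R0 | ]; lra.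
Qed.

Lemma cont_within_local (D : R -> Prop) f g x d : 0 < d -> D x ->
  (forall y, D y -> Rabs (y - x) < d -> f y = g y) -> cont_within D f x -> cont_within D g x.
Proof.
  intros Hd Dx Hfg H eps He. destruct (H eps He) as [d1 [Hd1 Hd1']].
  exists (Rmin d d1). pose proof (Rmin_l d d1); pose proof (Rmin_r d d1).
  split; [apply Rmin_pos; lra|]. intros y Dy Hy.
  rewrite <- !Hfg; auto; [apply Hd1'; auto; lra | rewrite Rminus_diag, Rabs_R0 | ]; lra.
Qed.

Lemma deriv_within_split (D : R -> Prop) f x l :
  deriv_within (fun y => D y /\ y <= x) f x l -> deriv_within (fun y => D y /\ x <= y) f x l ->
  deriv_within D f x l.
Proof.
  intros H1 H2 eps He. destruct (H1 eps He) as [d1 [Hd1 Hd1']]. destruct (H2 eps He) as [d2 [Hd2 Hd2']].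
  exists (Rmin d1 d2). pose proof (Rmin_l d1 d2); pose proof (Rmin_r d1 d2).
  split; [apply Rmin_pos; lra|]. intros y Dy Hyx Hy.
  destruct (Rle_or_lt y x); [apply Hd1' | apply Hd2']; auto; try split; auto; lra.
Qed.

Lemma cont_within_split (D : R -> Prop) f x :
  cont_within (fun y => D y /\ y <= x) f x -> cont_within (fun y => D y /\ x <= y) f x ->
  cont_within D f x.
Proof.
  intros H1 H2 eps He. destruct (H1 eps He) as [d1 [Hd1 Hd1']]. destruct (H2 eps He) as [d2 [Hd2 Hd2']].
  exists (Rmin d1 d2). pose proof (Rmin_l d1 d2); pose proof (Rmin_r d1 d2).
  split; [apply Rmin_pos; lra|]. intros y Dy Hy.
  destruct (Rle_or_lt y x); [apply Hd1' | apply Hd2']; auto; try split; auto; lra.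
Qed.

Lemma deriv_within_scal (D : R -> Prop) k f x l : 0 < k ->
  deriv_within D f x l -> deriv_within D (fun y => k * f y) x (k * l).
Proof.
  intros Hk H eps He. destruct (H (eps / k)) as [d [Hd Hd']]; [apply Rdiv_lt_0_compat; lra|].
  exists d. split; auto. intros y Dy Hyx Hy.
  replace ((k * f y - k * f x) / (y - x) - k * l) with (k * ((f y - f x) / (y - x) - l)) by (field; lra).
  rewrite Rabs_mult, Rabs_right by lra.
  specialize (Hd' y Dy Hyx Hy). apply (Rmult_lt_compat_l k) in Hd'; [|lra].
  replace (k * (eps / k)) with eps in Hd' by (field; lra). exact Hd'.
Qed.

Lemma pw_pos x y : 0 < x -> pw x y = Rpower x y.
Proof. intros; unfold pw; destruct (Rle_dec x 0); lra. Qed.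

Lemma pw_nonpos x y : x <= 0 -> pw x y = 0.
Proof. intros; unfold pw; destruct (Rle_dec x 0); lra. Qed.

Lemma Rpower_pos x y : 0 < Rpower x y.
Proof. apply exp_pos. Qed.

Lemma pw_nonneg x y : 0 <= pw x y.
Proof. unfold pw; destruct (Rle_dec x 0); [lra | left; apply Rpower_pos]. Qed.

Lemma Rpower_1_base q : Rpower 1 q = 1.
Proof. unfold Rpower; rewrite ln_1, Rmult_0_r; apply exp_0. Qed.

Lemma Rpower_le_1 x q : 0 < x <= 1 -> 0 <= q -> Rpower x q <= 1.
Proof. intros; rewrite <- (Rpower_1_base q); apply Rle_Rpower_l; lra. Qed.

Lemma Rpower_pred x q : 0 < x -> Rpower x q = x * Rpower x (q - 1).
Proof.
  intros Hx. rewrite <- (Rpower_1 x) at 2 by exact Hx. rewrite <- Rpower_plus. f_equal; ring.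
Qed.

Lemma Rpower_le_base x q : 0 < x <= 1 -> 1 <= q -> Rpower x q <= x.
Proof.
  intros Hx Hq. rewrite Rpower_pred by lra.
  assert (Rpower x (q - 1) <= 1) by (apply Rpower_le_1; lra). nra.
Qed.

Lemma dpl_Rpower_half_plus q s : -1 < s ->
  derivable_pt_lim (fun s => Rpower ((1 + s) / 2) q) s (q * Rpower ((1 + s) / 2) (q - 1) * (1 / 2)).
Proof.
  intros Hs. apply (dpl_comp (fun y => Rpower y q) (fun s => (1 + s) / 2)).
  - eapply dpl_eq; [apply (dpl_mult (fun s => 1 + s) (fun _ => / 2));
                     [apply dpl_plus; [apply dpl_const | apply dpl_id] | apply dpl_const]|].
    field.
  - apply derivable_pt_lim_power. lra.
Qed.

Lemma dpl_Rpower_half_minus q s : s < 1 ->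
  derivable_pt_lim (fun s => Rpower ((1 - s) / 2) q) s (q * Rpower ((1 - s) / 2) (q - 1) * (- 1 / 2)).
Proof.
  intros Hs. apply (dpl_comp (fun y => Rpower y q) (fun s => (1 - s) / 2)).
  - eapply dpl_eq; [apply (dpl_mult (fun s => 1 - s) (fun _ => / 2));
                     [apply dpl_minus; [apply dpl_const | apply dpl_id] | apply dpl_const]|].
    field.
  - apply derivable_pt_lim_power. lra.
Qed.

(** * The function [h_c] *)

Ltac pw_interior := rewrite ?(pw_pos ((1 + _) / 2)), ?(pw_pos ((1 - _) / 2)) by lra.

Section Hc.

Variables p c : R.

(* With [pw] instead of [Rpower] the formulas stay correct at [s = -1], where [Rpower 0 _ = 1]. *)
Definition dhc s := p / 2 * pw ((1 + s) / 2) (p - 1) + pw c p * (p / 2) * pw ((1 - s) / 2) (p - 1).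
Definition Ehc s := pw ((1 + s) / 2) (p - 2) - pw c p * pw ((1 - s) / 2) (p - 2).
Definition d2hc s := p * (p - 1) / 4 * Ehc s.

Lemma hc_derive s : -1 < s < 1 -> derivable_pt_lim (hc p c) s (dhc s).
Proof.
  intros Hs. apply (dpl_local (fun s => Rpower ((1 + s) / 2) p - pw c p * Rpower ((1 - s) / 2) p)
                     _ _ _ (Rmin (1 + s) (1 - s))); [apply Rmin_pos; lra | |].
  - intros y Hy. pose proof (Rmin_l (1 + s) (1 - s)); pose proof (Rmin_r (1 + s) (1 - s)).
    apply Rabs_def2 in Hy. unfold hc. pw_interior. reflexivity.
  - eapply dpl_eq; [apply dpl_minus; [apply dpl_Rpower_half_plus | apply dpl_scal, dpl_Rpower_half_minus]; lra|].
    unfold dhc. pw_interior. field.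
Qed.

Lemma dhc_derive s : -1 < s < 1 -> derivable_pt_lim dhc s (d2hc s).
Proof.
  intros Hs. apply (dpl_local (fun s => p / 2 * Rpower ((1 + s) / 2) (p - 1)
                                         + pw c p * (p / 2) * Rpower ((1 - s) / 2) (p - 1))
                     _ _ _ (Rmin (1 + s) (1 - s))); [apply Rmin_pos; lra | |].
  - intros y Hy. pose proof (Rmin_l (1 + s) (1 - s)); pose proof (Rmin_r (1 + s) (1 - s)).
    apply Rabs_def2 in Hy. unfold dhc. pw_interior. reflexivity.
  - eapply dpl_eq; [apply dpl_plus; apply dpl_scal; [apply dpl_Rpower_half_plus | apply dpl_Rpower_half_minus]; lra|].
    unfold d2hc, Ehc. pw_interior. replace (p - 1 - 1) with (p - 2) by ring. field.
Qed.

(* In the variables [u = (1 + s) / 2], [v = (1 - s) / 2] one has [s = u - v], [1 - s^2 = 4 u v], [u + v = 1]. *)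
Lemma Dop_hc s : -1 < s < 1 -> Dop p s (hc p c s) (dhc s) (d2hc s) = p ^ 2 * ((1 + s) / 2) * ((1 - s) / 2) * Ehc s.
Proof.
  intros Hs. unfold Dop, hc, dhc, d2hc, Ehc. pw_interior.
  set (u := (1 + s) / 2). set (v := (1 - s) / 2).
  assert (0 < u) by (unfold u; lra). assert (0 < v) by (unfold v; lra).
  rewrite (Rpower_pred u p), (Rpower_pred u (p - 1)), (Rpower_pred v p), (Rpower_pred v (p - 1)) by auto.
  replace (p - 1 - 1) with (p - 2) by ring.
  replace s with (u - v) by (unfold u, v; field). replace (1 - (u - v) ^ 2) with (4 * u * v) by (unfold u, v; field).
  field.
Qed.

Lemma Kop_hc s : -1 < s < 1 -> Kop p s (hc p c s) (dhc s) (d2hc s) = 0.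
Proof.
  intros Hs. unfold Kop, hc, dhc, d2hc, Ehc. pw_interior.
  set (u := (1 + s) / 2). set (v := (1 - s) / 2).
  assert (0 < u) by (unfold u; lra). assert (0 < v) by (unfold v; lra).
  rewrite (Rpower_pred u p), (Rpower_pred u (p - 1)), (Rpower_pred v p), (Rpower_pred v (p - 1)) by auto.
  replace (p - 1 - 1) with (p - 2) by ring.
  replace s with (u - v) by (unfold u, v; field). replace (1 - (u - v) ^ 2) with (4 * u * v) by (unfold u, v; field).
  replace 1 with (u + v) by (unfold u, v; field). field.
Qed.

Lemma Ehc_factor s : -1 < s < 1 ->
  Ehc s = Rpower ((1 - s) / 2) (p - 2) * (Rpower ((1 + s) / (1 - s)) (p - 2) - pw c p).
Proof.
  intros Hs. unfold Ehc. pw_interior.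
  replace ((1 + s) / 2) with ((1 + s) / (1 - s) * ((1 - s) / 2)) by (field; lra).
  rewrite <- Rpower_mult_distr by (try apply Rdiv_lt_0_compat; lra). ring.
Qed.

Lemma Ehc_nonpos s : 1 <= c -> 2 < p -> -1 < s < 1 -> (1 + s) / (1 - s) <= c -> Ehc s <= 0.
Proof.
  intros Hc Hp Hs Hsc. rewrite Ehc_factor by auto.
  assert (Rpower ((1 + s) / (1 - s)) (p - 2) <= Rpower c (p - 2)).
  { apply Rle_Rpower_l; [lra | split; auto; apply Rdiv_lt_0_compat; lra]. }
  assert (Rpower c (p - 2) <= Rpower c p) by (apply Rle_Rpower; lra).
  rewrite pw_pos by lra. pose proof (Rpower_pos ((1 - s) / 2) (p - 2)). nra.
Qed.

(* [Ehc] changes sign at most once, from [<= 0] to [> 0], since [(1 + s) / (1 - s)] increases. *)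
Lemma Ehc_nonpos_left s1 s2 : 2 < p -> -1 < s1 -> s1 < s2 -> s2 < 1 -> Ehc s2 <= 0 -> Ehc s1 <= 0.
Proof.
  intros Hp H1 H12 H2 He. rewrite Ehc_factor in * by lra.
  pose proof (Rpower_pos ((1 - s1) / 2) (p - 2)); pose proof (Rpower_pos ((1 - s2) / 2) (p - 2)).
  assert (Rpower ((1 + s2) / (1 - s2)) (p - 2) - pw c p <= 0) by nra.
  assert (Rpower ((1 + s1) / (1 - s1)) (p - 2) < Rpower ((1 + s2) / (1 - s2)) (p - 2)).
  { apply Rlt_Rpower_l; [lra | split; [apply Rdiv_lt_0_compat; lra|]].
    apply (Rmult_lt_reg_r ((1 - s1) * (1 - s2))); [nra|]. field_simplify; lra. }
  nra.
Qed.

Lemma dhc_pos s : 0 < p -> -1 < s < 1 -> 0 < dhc s.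
Proof.
  intros Hp Hs. unfold dhc. pw_interior.
  pose proof (Rpower_pos ((1 + s) / 2) (p - 1)); pose proof (Rpower_pos ((1 - s) / 2) (p - 1)).
  pose proof (pw_nonneg c p).
  assert (0 <= pw c p * (p / 2) * Rpower ((1 - s) / 2) (p - 1)) by (repeat apply Rmult_le_pos; lra).
  nra.
Qed.

Lemma dhc_bound s : 1 < p -> -1 < s < 1 -> Rabs (dhc s) <= p / 2 * (1 + pw c p).
Proof.
  intros Hp Hs. rewrite Rabs_right by (left; apply dhc_pos; lra).
  unfold dhc. pw_interior. pose proof (pw_nonneg c p).
  assert (Rpower ((1 + s) / 2) (p - 1) <= 1) by (apply Rpower_le_1; lra).
  assert (Rpower ((1 - s) / 2) (p - 1) <= 1) by (apply Rpower_le_1; lra).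
  assert (0 <= pw c p * (p / 2)) by nra. nra.
Qed.

Lemma hc_bound s : 0 < p -> -1 < s < 1 -> Rabs (hc p c s) <= 1 + pw c p.
Proof.
  intros Hp Hs. unfold hc. pw_interior. pose proof (pw_nonneg c p).
  assert (Rpower ((1 + s) / 2) p <= 1) by (apply Rpower_le_1; lra).
  assert (Rpower ((1 - s) / 2) p <= 1) by (apply Rpower_le_1; lra).
  pose proof (Rpower_pos ((1 + s) / 2) p); pose proof (Rpower_pos ((1 - s) / 2) p).
  apply Rabs_le. split; nra.
Qed.

Lemma hc_at1 : hc p c 1 = 1.
Proof.
  unfold hc. rewrite (pw_nonpos ((1 - 1) / 2)), pw_pos by lra.
  replace ((1 + 1) / 2) with 1 by field. rewrite Rpower_1_base. ring.
Qed.

Lemma hc_atm1 : hc p c (-1) = - pw c p.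
Proof.
  unfold hc. rewrite (pw_nonpos ((1 + -1) / 2)), (pw_pos ((1 - -1) / 2)) by lra.
  replace ((1 - -1) / 2) with 1 by field. rewrite Rpower_1_base. ring.
Qed.

Lemma dhc_atm1 : dhc (-1) = pw c p * (p / 2).
Proof.
  unfold dhc. rewrite (pw_nonpos ((1 + -1) / 2)), (pw_pos ((1 - -1) / 2)) by lra.
  replace ((1 - -1) / 2) with 1 by field. rewrite Rpower_1_base. ring.
Qed.

Lemma hc_tends1_at1 : 1 < p -> tends0_at1 (fun s => hc p c s - 1).
Proof.
  intros Hp eps He. pose proof (pw_nonneg c p) as HK.
  destruct (dpl_continuous _ _ _ (dpl_Rpower_half_plus p 1 ltac:(lra)) (eps / 2)) as [d1 [Hd1 Hd1']]; [lra|].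
  set (d := Rmin (Rmin d1 1) (eps / (pw c p + 1))).
  assert (0 < eps / (pw c p + 1)) by (apply Rdiv_lt_0_compat; lra).
  pose proof (Rmin_l (Rmin d1 1) (eps / (pw c p + 1))); pose proof (Rmin_r (Rmin d1 1) (eps / (pw c p + 1))).
  pose proof (Rmin_l d1 1); pose proof (Rmin_r d1 1).
  exists d. split; [repeat apply Rmin_pos; lra|]. intros s Hs. unfold d in *.
  unfold hc. pw_interior.
  specialize (Hd1' s). replace ((1 + 1) / 2) with 1 in Hd1' by field. rewrite Rpower_1_base in Hd1'.
  assert (A : Rabs (Rpower ((1 + s) / 2) p - 1) < eps / 2) by (apply Hd1'; apply Rabs_def1; lra).
  apply Rabs_def2 in A.
  assert (B0 : Rpower ((1 - s) / 2) p <= (1 - s) / 2) by (apply Rpower_le_base; lra).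
  pose proof (Rpower_pos ((1 - s) / 2) p).
  assert (Hq : (pw c p + 1) * (eps / (pw c p + 1)) = eps) by (field; lra).
  assert (B : pw c p * Rpower ((1 - s) / 2) p < eps / 2) by nra.
  assert (0 <= pw c p * Rpower ((1 - s) / 2) p) by nra.
  apply Rabs_def1; lra.
Qed.


Lemma hc_deriv_within_atm1 : 2 <= p -> deriv_within (fun y => -1 <= y <= 1) (hc p c) (-1) (dhc (-1)).
Proof.
  intros Hp eps He. rewrite dhc_atm1. pose proof (pw_nonneg c p) as HK. set (K := pw c p) in *.
  destruct (dpl_Rpower_half_minus p (-1) ltac:(lra) (eps / (2 * (K + 1)))) as [d1 Hd1];
    [apply Rdiv_lt_0_compat; lra|].
  pose proof (cond_pos d1).
  exists (Rmin (Rmin d1 eps) 1). pose proof (Rmin_l (Rmin d1 eps) 1); pose proof (Rmin_r (Rmin d1 eps) 1).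
  pose proof (Rmin_l d1 eps); pose proof (Rmin_r d1 eps).
  split; [repeat apply Rmin_pos; lra|]. intros y Dy Hyx Hy.
  rewrite Rabs_right in Hy by lra.
  rewrite hc_atm1. unfold hc. fold K. pw_interior.
  specialize (Hd1 (y + 1) ltac:(lra)). rewrite Rabs_right in Hd1 by lra. specialize (Hd1 ltac:(lra)).
  replace (-1 + (y + 1)) with y in Hd1 by ring. replace ((1 - -1) / 2) with 1 in Hd1 by field.
  rewrite !Rpower_1_base in Hd1. apply Rabs_def2 in Hd1.
  replace ((Rpower ((1 + y) / 2) p - K * Rpower ((1 - y) / 2) p - - K) / (y - -1) - K * (p / 2))
    with (Rpower ((1 + y) / 2) p / (y + 1) - K * ((Rpower ((1 - y) / 2) p - 1) / (y + 1) - p * 1 * (-1 / 2)))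
    by (field; lra).
  assert (A : 0 <= Rpower ((1 + y) / 2) p / (y + 1) <= eps / 4).
  { rewrite Rpower_pred by lra.
    assert (Rpower ((1 + y) / 2) (p - 1) <= (1 + y) / 2) by (apply Rpower_le_base; lra).
    pose proof (Rpower_pos ((1 + y) / 2) (p - 1)).
    replace ((1 + y) / 2 * Rpower ((1 + y) / 2) (p - 1) / (y + 1)) with (Rpower ((1 + y) / 2) (p - 1) / 2)
      by (field; lra).
    lra. }
  assert (B : Rabs (K * ((Rpower ((1 - y) / 2) p - 1) / (y + 1) - p * 1 * (-1 / 2))) < eps / 2).
  { apply Rabs_mult_lt_bound with K; [lra | lra | rewrite Rabs_right; lra |].
    replace (eps / 2 / (K + 1)) with (eps / (2 * (K + 1))) by (field; lra).
    apply Rabs_def1; lra. }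
  apply Rabs_def2 in B. apply Rabs_def1; lra.
Qed.

Lemma dhc_cont_within_atm1 : 2 <= p -> cont_within (fun y => -1 <= y <= 1) dhc (-1).
Proof.
  intros Hp eps He. rewrite dhc_atm1. pose proof (pw_nonneg c p) as HK. set (K := pw c p) in *.
  destruct (dpl_continuous _ _ _ (dpl_Rpower_half_minus (p - 1) (-1) ltac:(lra)) (eps / (p * (K + 1))))
    as [d1 [Hd1 Hd1']]; [apply Rdiv_lt_0_compat; nra|].
  exists (Rmin (Rmin d1 (eps / p)) 1).
  pose proof (Rmin_l (Rmin d1 (eps / p)) 1); pose proof (Rmin_r (Rmin d1 (eps / p)) 1).
  pose proof (Rmin_l d1 (eps / p)); pose proof (Rmin_r d1 (eps / p)).
  split; [repeat apply Rmin_pos; try apply Rdiv_lt_0_compat; lra|]. intros y Dy Hy.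
  destruct (Req_dec y (-1)) as [->|Hy1].
  { rewrite dhc_atm1, Rminus_diag, Rabs_R0. lra. }
  rewrite Rabs_right in Hy by lra.
  unfold dhc. fold K. pw_interior.
  specialize (Hd1' y ltac:(apply Rabs_def1; lra)).
  replace ((1 - -1) / 2) with 1 in Hd1' by field. rewrite Rpower_1_base in Hd1'.
  assert (A : 0 < Rpower ((1 + y) / 2) (p - 1) <= (1 + y) / 2).
  { split; [apply Rpower_pos | apply Rpower_le_base; lra]. }
  assert (A2 : p / 2 * Rpower ((1 + y) / 2) (p - 1) < eps / 2).
  { assert (p * (1 + y) < p * (eps / p)) by (apply Rmult_lt_compat_l; lra).
    assert (p * (eps / p) = eps) by (field; lra). nra. }
  assert (B : Rabs (K * (p / 2) * (Rpower ((1 - y) / 2) (p - 1) - 1)) < eps / 2).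
  { apply Rabs_mult_lt_bound with (K * (p / 2)); [nra | lra | rewrite Rabs_right; nra |].
    replace (eps / 2 / (K * (p / 2) + 1)) with (eps / (p * K + 2)) by (field; nra).
    eapply Rlt_le_trans; [exact Hd1'|].
    apply Rmult_le_compat_l; [lra|]. apply Rinv_le_contravar; nra. }
  apply Rabs_def2 in B. apply Rabs_def1; nra.
Qed.

End Hc.

Lemma hc_at_ratio p z : -1 < z < 1 -> hc p ((1 + z) / (1 - z)) z = 0.
Proof.
  intros Hz. unfold hc. rewrite !pw_pos by (try apply Rdiv_lt_0_compat; lra).
  rewrite Rpower_mult_distr by (try apply Rdiv_lt_0_compat; lra).
  replace ((1 + z) / (1 - z) * ((1 - z) / 2)) with ((1 + z) / 2) by (field; lra). ring.
Qed.

(** * The function [phi] *)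

Lemma pw_mul_div r y q : 0 < r -> 0 <= y -> pw r q * pw (y / r) q = pw y q.
Proof.
  intros Hr Hy. destruct (Req_dec y 0) as [->|Hy0].
  - rewrite (pw_nonpos 0), (pw_nonpos (0 / r)) by (unfold Rdiv; lra). ring.
  - rewrite !pw_pos by (try apply Rdiv_lt_0_compat; lra).
    rewrite Rpower_mult_distr by (try apply Rdiv_lt_0_compat; lra). f_equal. field. lra.
Qed.

Lemma phi_hc p c x y : 0 <= x -> 0 <= y -> 0 < x + y -> phi p (hc p c) x y = pw y p - pw c p * pw x p.
Proof.
  intros Hx Hy Hr. unfold phi, hc.
  replace ((1 + (y - x) / (x + y)) / 2) with (y / (x + y)) by (field; lra).
  replace ((1 - (y - x) / (x + y)) / 2) with (x / (x + y)) by (field; lra).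
  rewrite <- (pw_mul_div (x + y) y p), <- (pw_mul_div (x + y) x p) by lra. ring.
Qed.

Lemma phi_ge_of_ge_hc p c (g : R -> R) : (forall s, -1 <= s <= 1 -> g s >= hc p c s) ->
  forall x y, 0 <= x -> 0 <= y -> (x, y) <> (0, 0) -> phi p g x y >= pw y p - pw c p * pw x p.
Proof.
  intros Hg x y Hx Hy Hxy.
  assert (Hr : 0 < x + y).
  { destruct (Req_dec x 0) as [->|]; [destruct (Req_dec y 0) as [->|]|]; try lra. now exfalso. }
  rewrite <- phi_hc by lra. unfold phi.
  assert (Hs : -1 <= (y - x) / (x + y) <= 1).
  { split; apply (Rmult_le_reg_r (x + y)); auto; field_simplify; lra. }
  specialize (Hg _ Hs). pose proof (pw_nonneg (x + y) p). nra.
Qed.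

Lemma dpl_ratio_x a b : 0 < a + b ->
  derivable_pt_lim (fun t => (b - t) / (t + b)) a (- (1 + (b - a) / (a + b)) / (a + b)).
Proof.
  intros H. eapply dpl_eq.
  - apply dpl_div; [apply dpl_minus; [apply dpl_const | apply dpl_id] | apply dpl_plus; [apply dpl_id | apply dpl_const] | lra].
  - cbv beta. field. lra.
Qed.

Lemma dpl_ratio_y a b : 0 < a + b ->
  derivable_pt_lim (fun t => (t - a) / (a + t)) b ((1 - (b - a) / (a + b)) / (a + b)).
Proof.
  intros H. eapply dpl_eq.
  - apply dpl_div; [apply dpl_minus; [apply dpl_id | apply dpl_const] | apply dpl_plus; [apply dpl_const | apply dpl_id] | lra].
  - cbv beta. field. lra.
Qed.

Lemma dpl_Rpower_sum_x q a b : 0 < a + b ->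
  derivable_pt_lim (fun t => Rpower (t + b) q) a (q * Rpower (a + b) (q - 1)).
Proof.
  intros H. eapply dpl_eq.
  - apply (dpl_comp (fun u => Rpower u q) (fun t => t + b)); [apply dpl_plus; [apply dpl_id | apply dpl_const]|].
    apply derivable_pt_lim_power. exact H.
  - ring.
Qed.

Lemma dpl_Rpower_sum_y q a b : 0 < a + b ->
  derivable_pt_lim (fun t => Rpower (a + t) q) b (q * Rpower (a + b) (q - 1)).
Proof.
  intros H. eapply dpl_eq.
  - apply (dpl_comp (fun u => Rpower u q) (fun t => a + t)); [apply dpl_plus; [apply dpl_const | apply dpl_id]|].
    apply derivable_pt_lim_power. exact H.
  - ring.
Qed.

Lemma ratio_close x y a b d eta : 0 < x -> 0 < y -> 0 < eta -> 0 < d ->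
  d <= x / 2 -> d <= y / 2 -> d <= eta * (x + y) / 4 -> Rabs (a - x) < d -> Rabs (b - y) < d ->
  0 < a /\ 0 < b /\ Rabs ((b - a) / (a + b) - (y - x) / (x + y)) < eta.
Proof.
  intros Hx Hy He Hd H1 H2 H3 Ha Hb. apply Rabs_def2 in Ha. apply Rabs_def2 in Hb.
  split; [lra | split; [lra|]].
  replace ((b - a) / (a + b) - (y - x) / (x + y)) with (2 * (x * (b - y) - y * (a - x)) / ((a + b) * (x + y)))
    by (field; lra).
  assert (HN : Rabs (x * (b - y) - y * (a - x)) < (x + y) * d) by (apply Rabs_def1; nra).
  assert (0 < (a + b) * (x + y)) by nra.
  unfold Rdiv. rewrite !Rabs_mult, Rabs_inv, (Rabs_right 2), (Rabs_right ((a + b) * (x + y))) by lra.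
  apply (Rmult_lt_reg_r ((a + b) * (x + y))); [lra|]. rewrite Rmult_assoc, Rinv_l by lra.
  assert (eta * ((x + y) / 2 * (x + y)) < eta * ((a + b) * (x + y))).
  { apply Rmult_lt_compat_l; auto. apply Rmult_lt_compat_r; lra. }
  assert (2 * ((x + y) * d) <= eta * ((x + y) / 2 * (x + y))) by nra.
  lra.
Qed.

(* Writing the form as [R0 (K |h + k|^2 + X |h|^2 + Y |k|^2)] makes each part nonpositive when [|k| <= |h|]. *)
Lemma quadratic_form_nonpos A B C h1 h2 k1 k2 R0 K X Y : 0 < R0 -> K <= 0 -> X <= 0 -> X + Y <= 0 ->
  A = R0 * (K + X) -> B = R0 * K -> C = R0 * (K + Y) -> k1 ^ 2 + k2 ^ 2 <= h1 ^ 2 + h2 ^ 2 ->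
  A * (h1 ^ 2 + h2 ^ 2) + 2 * B * (h1 * k1 + h2 * k2) + C * (k1 ^ 2 + k2 ^ 2) <= 0.
Proof.
  intros HR HK HX HXY -> -> -> Hk.
  replace (R0 * (K + X) * (h1 ^ 2 + h2 ^ 2) + 2 * (R0 * K) * (h1 * k1 + h2 * k2) + R0 * (K + Y) * (k1 ^ 2 + k2 ^ 2))
    with (R0 * (K * ((h1 + k1) ^ 2 + (h2 + k2) ^ 2) + (X * (h1 ^ 2 + h2 ^ 2) + Y * (k1 ^ 2 + k2 ^ 2)))) by ring.
  assert (0 <= (h1 + k1) ^ 2 + (h2 + k2) ^ 2) by (apply Rplus_le_le_0_compat; apply pow2_ge_0).
  assert (0 <= k1 ^ 2 + k2 ^ 2) by (apply Rplus_le_le_0_compat; apply pow2_ge_0).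
  assert (K * ((h1 + k1) ^ 2 + (h2 + k2) ^ 2) <= 0) by nra.
  assert (X * (h1 ^ 2 + h2 ^ 2) + Y * (k1 ^ 2 + k2 ^ 2) <= 0).
  { destruct (Rle_or_lt 0 Y).
    - assert (Y * (k1 ^ 2 + k2 ^ 2) <= Y * (h1 ^ 2 + h2 ^ 2)) by (apply Rmult_le_compat_l; lra). nra.
    - nra. }
  nra.
Qed.

Section Phi.

Variables (p : R) (g G1 G2 : R -> R) (lo hi : R).
Hypothesis Hg : forall w, lo < w < hi -> derivable_pt_lim g w (G1 w) /\ derivable_pt_lim G1 w (G2 w).

Lemma dpl_profile_minus S S' x : lo < S x < hi -> derivable_pt_lim S x S' ->
  derivable_pt_lim (fun t => p * g (S t) - (1 + S t) * G1 (S t)) x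
    (((p - 1) * G1 (S x) - (1 + S x) * G2 (S x)) * S').
Proof.
  intros Hs HS. destruct (Hg _ Hs) as [Dg DG1]. eapply dpl_eq.
  - apply dpl_minus; [apply dpl_scal, (dpl_comp g S); [exact HS | exact Dg]|].
    apply dpl_mult; [apply dpl_plus; [apply dpl_const | exact HS] | apply (dpl_comp G1 S); [exact HS | exact DG1]].
  - cbv beta. ring.
Qed.

Lemma dpl_profile_plus S S' x : lo < S x < hi -> derivable_pt_lim S x S' ->
  derivable_pt_lim (fun t => p * g (S t) + (1 - S t) * G1 (S t)) x
    (((p - 1) * G1 (S x) + (1 - S x) * G2 (S x)) * S').
Proof.
  intros Hs HS. destruct (Hg _ Hs) as [Dg DG1]. eapply dpl_eq.
  - apply dpl_plus; [apply dpl_scal, (dpl_comp g S); [exact HS | exact Dg]|].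
    apply dpl_mult; [apply dpl_minus; [apply dpl_const | exact HS] | apply (dpl_comp G1 S); [exact HS | exact DG1]].
  - cbv beta. ring.
Qed.

Definition phi_x a b := Rpower (a + b) (p - 1) *
  (p * g ((b - a) / (a + b)) - (1 + (b - a) / (a + b)) * G1 ((b - a) / (a + b))).
Definition phi_y a b := Rpower (a + b) (p - 1) *
  (p * g ((b - a) / (a + b)) + (1 - (b - a) / (a + b)) * G1 ((b - a) / (a + b))).

Ltac power_algebra a b :=
  rewrite ?(Rpower_pred (a + b) p), ?(Rpower_pred (a + b) (p - 1)) by lra;
  replace (p - 1 - 1) with (p - 2) by ring; field; lra.

Lemma phi_derive_x a b : 0 < a -> 0 < b -> lo < (b - a) / (a + b) < hi ->
  derivable_pt_lim (fun t => phi p g t b) a (phi_x a b).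
Proof.
  intros Ha Hb Hs. destruct (Hg _ Hs) as [Dg _].
  apply (dpl_local (fun t => Rpower (t + b) p * g ((b - t) / (t + b))) _ _ _ (a + b)); [lra | |].
  { intros t Ht. apply Rabs_def2 in Ht. unfold phi. rewrite pw_pos by lra. reflexivity. }
  eapply dpl_eq.
  - apply dpl_mult; [apply dpl_Rpower_sum_x; lra|].
    apply (dpl_comp g (fun t => (b - t) / (t + b))); [apply dpl_ratio_x; lra | exact Dg].
  - unfold phi_x. power_algebra a b.
Qed.

Lemma phi_derive_y a b : 0 < a -> 0 < b -> lo < (b - a) / (a + b) < hi ->
  derivable_pt_lim (fun t => phi p g a t) b (phi_y a b).
Proof.
  intros Ha Hb Hs. destruct (Hg _ Hs) as [Dg _].
  apply (dpl_local (fun t => Rpower (a + t) p * g ((t - a) / (a + t))) _ _ _ (a + b)); [lra | |].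
  { intros t Ht. apply Rabs_def2 in Ht. unfold phi. rewrite pw_pos by lra. reflexivity. }
  eapply dpl_eq.
  - apply dpl_mult; [apply dpl_Rpower_sum_y; lra|].
    apply (dpl_comp g (fun t => (t - a) / (a + t))); [apply dpl_ratio_y; lra | exact Dg].
  - unfold phi_y. power_algebra a b.
Qed.

Section Hessian.

Variables x y : R.
Hypotheses (Hx : 0 < x) (Hy : 0 < y) (Hs : lo < (y - x) / (x + y) < hi).
Let s := (y - x) / (x + y).

Lemma phi_x_derive_x : derivable_pt_lim (fun t => phi_x t y) x
  (Rpower (x + y) (p - 2) * (p * (p - 1) * g s - 2 * (p - 1) * (1 + s) * G1 s + (1 + s) ^ 2 * G2 s)).
Proof.
  unfold phi_x. eapply dpl_eq.
  - apply dpl_mult; [apply dpl_Rpower_sum_x; lra|].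
    apply (dpl_profile_minus (fun t => (y - t) / (t + y))); [exact Hs | apply dpl_ratio_x; lra].
  - unfold s. power_algebra x y.
Qed.

Lemma phi_x_derive_y : derivable_pt_lim (fun t => phi_x x t) y
  (Rpower (x + y) (p - 2) * Kop p s (g s) (G1 s) (G2 s)).
Proof.
  unfold phi_x. eapply dpl_eq.
  - apply dpl_mult; [apply dpl_Rpower_sum_y; lra|].
    apply (dpl_profile_minus (fun t => (t - x) / (x + t))); [exact Hs | apply dpl_ratio_y; lra].
  - unfold s, Kop. power_algebra x y.
Qed.

Lemma phi_y_derive_y : derivable_pt_lim (fun t => phi_y x t) y
  (Rpower (x + y) (p - 2) * (p * (p - 1) * g s + 2 * (p - 1) * (1 - s) * G1 s + (1 - s) ^ 2 * G2 s)).
Proof.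
  unfold phi_y. eapply dpl_eq.
  - apply dpl_mult; [apply dpl_Rpower_sum_y; lra|].
    apply (dpl_profile_plus (fun t => (t - x) / (x + t))); [exact Hs | apply dpl_ratio_y; lra].
  - unfold s. power_algebra x y.
Qed.


Lemma phi_second_partials : second_partials (phi p g) x y (phi_x x y) (phi_y x y)
  (Rpower (x + y) (p - 2) * (p * (p - 1) * g s - 2 * (p - 1) * (1 + s) * G1 s + (1 + s) ^ 2 * G2 s))
  (Rpower (x + y) (p - 2) * Kop p s (g s) (G1 s) (G2 s))
  (Rpower (x + y) (p - 2) * (p * (p - 1) * g s + 2 * (p - 1) * (1 - s) * G1 s + (1 - s) ^ 2 * G2 s)).
Proof.
  pose proof (Rmin_l (s - lo) (hi - s)); pose proof (Rmin_r (s - lo) (hi - s)).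
  set (eta := Rmin (s - lo) (hi - s)) in *.
  assert (Heta : 0 < eta) by (apply Rmin_pos; unfold s; lra).
  pose proof (Rmin_l (Rmin (x / 2) (y / 2)) (eta * (x + y) / 4)).
  pose proof (Rmin_r (Rmin (x / 2) (y / 2)) (eta * (x + y) / 4)).
  pose proof (Rmin_l (x / 2) (y / 2)); pose proof (Rmin_r (x / 2) (y / 2)).
  set (d := Rmin (Rmin (x / 2) (y / 2)) (eta * (x + y) / 4)) in *.
  assert (Hd : 0 < d) by (unfold d; repeat apply Rmin_pos; nra).
  exists phi_x, phi_y, d. split; [exact Hd|]. split; [|split; [reflexivity | split; [reflexivity|]]].
  - intros a b Ha Hb.
    destruct (ratio_close x y a b d eta Hx Hy Heta Hd ltac:(lra) ltac:(lra) ltac:(lra) Ha Hb)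
      as [Ha0 [Hb0 Hab]].
    apply Rabs_def2 in Hab. fold s in Hab.
    split; [apply phi_derive_x | apply phi_derive_y]; lra.
  - split; [apply phi_x_derive_x | split; [apply phi_x_derive_y | apply phi_y_derive_y]].
Qed.

Lemma phi_hessian_form_nonpos : 0 <= p ->
  Dop p s (g s) (G1 s) (G2 s) <= 0 -> Kop p s (g s) (G1 s) (G2 s) <= 0 -> 0 <= G1 s ->
  forall h1 h2 k1 k2 : R, k1 ^ 2 + k2 ^ 2 <= h1 ^ 2 + h2 ^ 2 ->
  (phi_x x y / x + Rpower (x + y) (p - 2) *
      (p * (p - 1) * g s - 2 * (p - 1) * (1 + s) * G1 s + (1 + s) ^ 2 * G2 s)) * (h1 ^ 2 + h2 ^ 2)
  + 2 * (Rpower (x + y) (p - 2) * Kop p s (g s) (G1 s) (G2 s)) * (h1 * k1 + h2 * k2)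
  + (Rpower (x + y) (p - 2) * (p * (p - 1) * g s + 2 * (p - 1) * (1 - s) * G1 s + (1 - s) ^ 2 * G2 s)
      + phi_y x y / y) * (k1 ^ 2 + k2 ^ 2) <= 0.
Proof.
  intros Hp HD HK HG1 h1 h2 k1 k2 Hk.
  set (D0 := Dop p s (g s) (G1 s) (G2 s)) in *.
  assert (HDx : D0 / (x / (x + y)) <= 0).
  { assert (0 < / (x / (x + y))) by (apply Rinv_0_lt_compat, Rdiv_lt_0_compat; lra). unfold Rdiv at 1. nra. }
  assert (HDy : D0 / (y / (x + y)) <= 0).
  { assert (0 < / (y / (x + y))) by (apply Rinv_0_lt_compat, Rdiv_lt_0_compat; lra). unfold Rdiv at 1. nra. }
  apply (quadratic_form_nonpos _ _ _ h1 h2 k1 k2 (Rpower (x + y) (p - 2)) (Kop p s (g s) (G1 s) (G2 s))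
           (D0 / (x / (x + y)) - 2 * p * G1 s) (D0 / (y / (x + y)) + 2 * p * G1 s));
    [apply Rpower_pos | exact HK | nra | lra | | reflexivity | | exact Hk];
    unfold phi_x, phi_y, D0, Dop, Kop, s; power_algebra x y.
Qed.

End Hessian.
End Phi.

Lemma increment_lower_bound f f1 t e : 0 < e -> -1 < t < 1 ->
  (forall x, t <= x < 1 -> derivable_pt_lim f x (f1 x)) ->
  (forall x, t <= x < 1 -> e <= (1 - x ^ 2) * f1 x) ->
  e / 8 <= f ((t + 1) / 2) - f t.
Proof.
  intros He Ht Hd Hb. set (t2 := (t + 1) / 2).
  destruct (MVT_cor2 f f1 t t2) as [c [Hc1 Hc2]]; [unfold t2; lra | intros c Hc; apply Hd; unfold t2 in *; lra|].
  assert (Hbc : e <= (1 - c ^ 2) * f1 c) by (apply Hb; unfold t2 in *; lra).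
  assert (0 < 1 - c) by (unfold t2 in *; lra).
  assert (0 < 1 - c ^ 2) by (unfold t2 in *; nra).
  assert (0 <= f1 c) by nra.
  assert (e <= 2 * (1 - c) * f1 c) by nra.
  assert ((1 - c) * f1 c <= (1 - t) * f1 c) by (apply Rmult_le_compat_r; lra).
  unfold t2 in *. nra.
Qed.

(** * The Legendre function [L] *)

Section Legendre.

Variables (p z : R) (L L1 L2 : R -> R).
Hypothesis Hp : 2 < p.
Hypothesis HL1 : forall s, -1 < s < 1 -> derivable_pt_lim L s (L1 s).
Hypothesis HL2 : forall s, -1 < s < 1 -> derivable_pt_lim L1 s (L2 s).
Hypothesis Hode : forall s, -1 < s < 1 -> (1 - s ^ 2) * L2 s - 2 * s * L1 s + p * L s = 0.
Hypothesis HL_at1 : tends0_at1 (fun s => L s - 1).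
Hypothesis Hz : -1 < z < 1.
Hypothesis HLz : L z = 0.
Hypothesis HL1eq : L 1 = 1.
Hypothesis Hzmax : forall s, z < s < 1 -> L s <> 0.

Lemma flux_derive s : -1 < s < 1 -> derivable_pt_lim (fun s => (1 - s ^ 2) * L1 s) s (- p * L s).
Proof.
  intros Hs. eapply dpl_eq; [apply dpl_mult; [apply dpl_1_minus_sqr | apply HL2, Hs]|].
  pose proof (Hode s Hs). lra.
Qed.

Lemma L_bounded_near1 : exists d, 0 < d < 1 /\ forall s, 1 - d < s < 1 -> Rabs (L s) < 2.
Proof.
  destruct (HL_at1 1) as [d [Hd Hs]]; [lra|].
  exists (Rmin d (1 / 2)). pose proof (Rmin_l d (1 / 2)); pose proof (Rmin_r d (1 / 2)).
  split; [split; [apply Rmin_pos|]; lra|]. intros s Hs'.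
  assert (H1 : Rabs (L s - 1) < 1) by (apply Hs; lra).
  apply Rabs_def2 in H1. apply Rabs_def1; lra.
Qed.

Lemma flux_lipschitz d : d < 1 -> (forall s, 1 - d < s < 1 -> Rabs (L s) < 2) ->
  forall t x, 1 - d < t -> t <= x < 1 ->
  Rabs ((1 - x ^ 2) * L1 x - (1 - t ^ 2) * L1 t) <= 2 * p * (x - t).
Proof.
  intros Hd Hb t x Ht Hx. destruct (Req_dec t x) as [<-|Hne].
  { rewrite Rminus_diag, Rabs_R0. lra. }
  destruct (MVT_cor2 (fun s => (1 - s ^ 2) * L1 s) (fun s => - p * L s) t x) as [c [Hc Hc2]];
    [lra | intros c Hc; apply flux_derive; lra|].
  rewrite Hc, !Rabs_mult, Rabs_Ropp, (Rabs_right p), (Rabs_right (x - t)) by lra.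
  assert (Rabs (L c) < 2) by (apply Hb; lra).
  assert (0 < p * (x - t)) by (apply Rmult_lt_0_compat; lra). nra.
Qed.

(* If [(1 - s^2) L'] stayed away from [0] near [1], [L'] would be of order [1/(1 - s)] and [L] could not
   converge at [1]. *)
Lemma flux_tends0 : tends0_at1 (fun s => (1 - s ^ 2) * L1 s).
Proof.
  intros eps Heps. destruct L_bounded_near1 as [d0 [Hd0 Hb]].
  destruct (HL_at1 (eps / 64)) as [d1 [Hd1 Hl]]; [lra|].
  set (d := Rmin (Rmin d0 d1) (eps / (4 * p))).
  pose proof (Rmin_l (Rmin d0 d1) (eps / (4 * p))); pose proof (Rmin_r (Rmin d0 d1) (eps / (4 * p))).
  pose proof (Rmin_l d0 d1); pose proof (Rmin_r d0 d1).
  assert (Hdp : 0 < d) by (repeat apply Rmin_pos; try lra; apply Rdiv_lt_0_compat; lra).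
  exists d. split; auto. intros t Ht.
  assert (Ht1 : -1 < t < 1) by (unfold d in *; lra).
  destruct (Rlt_or_le (Rabs ((1 - t ^ 2) * L1 t)) eps) as [|Hge]; auto. exfalso.
  assert (Hlip : forall x, t <= x < 1 -> Rabs ((1 - x ^ 2) * L1 x - (1 - t ^ 2) * L1 t) < eps / 2).
  { intros x Hx. eapply Rle_lt_trans; [apply (flux_lipschitz d0); [lra | exact Hb | unfold d in *; lra..]|].
    assert (Hq : 2 * p * (eps / (4 * p)) = eps / 2) by (field; lra).
    assert (2 * p * (x - t) < 2 * p * (eps / (4 * p))) by (apply Rmult_lt_compat_l; unfold d in *; lra).
    lra. }
  set (t2 := (t + 1) / 2).
  assert (Hc : Rabs (L t2 - L t) < eps / 16).
  { assert (A1 : Rabs (L t2 - 1) < eps / 64) by (apply Hl; unfold t2, d in *; lra).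
    assert (A2 : Rabs (L t - 1) < eps / 64) by (apply Hl; unfold d in *; lra).
    apply Rabs_def2 in A1; apply Rabs_def2 in A2. apply Rabs_def1; lra. }
  apply Rabs_def2 in Hc.
  destruct (Rle_or_lt 0 ((1 - t ^ 2) * L1 t)) as [Hpos|Hneg].
  - rewrite Rabs_right in Hge by lra.
    assert (eps / 2 / 8 <= L t2 - L t); [|lra].
    apply (increment_lower_bound L L1); try lra.
    + intros x Hx. apply HL1. lra.
    + intros x Hx. specialize (Hlip x Hx). apply Rabs_def2 in Hlip. lra.
  - rewrite Rabs_left in Hge by lra.
    assert (eps / 2 / 8 <= - L t2 - - L t); [|lra].
    apply (increment_lower_bound (fun x => - L x) (fun x => - L1 x)); try lra.
    + intros x Hx. apply dpl_opp, HL1. lra.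
    + intros x Hx. specialize (Hlip x Hx). apply Rabs_def2 in Hlip. lra.
Qed.

(* [((1 - s^2) L')' = - p L] with [L(1) = 1] and [(1 - s^2) L' -> 0] force [L'(1^-) = p / 2]. *)
Lemma L1_tends_at1 : tends0_at1 (fun s => L1 s - p / 2).
Proof.
  intros eps Heps. set (eta := eps / (4 * p)).
  assert (Heta : 0 < eta) by (apply Rdiv_lt_0_compat; lra).
  destruct (HL_at1 eta Heta) as [d1 [Hd1 Hl]].
  set (d := Rmin (Rmin d1 (1 / 2)) (eps / (2 * p))).
  pose proof (Rmin_l (Rmin d1 (1 / 2)) (eps / (2 * p))); pose proof (Rmin_r (Rmin d1 (1 / 2)) (eps / (2 * p))).
  pose proof (Rmin_l d1 (1 / 2)); pose proof (Rmin_r d1 (1 / 2)).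
  assert (Hdp : 0 < d) by (repeat apply Rmin_pos; try lra; apply Rdiv_lt_0_compat; lra).
  exists d. split; auto. intros y Hy.
  assert (B : Rabs (0 - (1 - y ^ 2) * L1 y - (- p) * (1 - y)) <= (p * eta) * (1 - y)).
  { apply (expansion_at1_bound (fun s => (1 - s ^ 2) * L1 s) (fun s => - p * L s) 0 (- p) (p * eta) d y);
      auto; try nra.
    - intros x Hx. apply flux_derive. unfold d in *; lra.
    - intros x Hx. replace (- p * L x - - p) with (- p * (L x - 1)) by ring.
      rewrite Rabs_mult, Rabs_Ropp, Rabs_right by lra. apply Rmult_le_compat_l; [lra|].
      left; apply Hl; unfold d in *; lra.
    - apply (tends0_at1_ext _ _ flux_tends0). intros; ring. }
  apply Rabs_le_inv in B.
  assert (Hpe : p * eta = eps / 4) by (unfold eta; field; lra).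
  assert (p * (1 - y) < p * (eps / (2 * p))) by (apply Rmult_lt_compat_l; unfold d in *; lra).
  assert (Hq : p * (eps / (2 * p)) = eps / 2) by (field; lra).
  assert (Hy1 : 0 < 1 - y) by lra.
  rewrite Hpe in B.
  assert (Hlow : - (eps / 4 + p * (1 - y) / 2) <= (1 + y) * (L1 y - p / 2)).
  { apply (Rmult_le_reg_l (1 - y)); nra. }
  assert (Hhigh : (1 + y) * (L1 y - p / 2) <= eps / 4 + p * (1 - y) / 2).
  { apply (Rmult_le_reg_l (1 - y)); nra. }
  unfold d in *. apply Rabs_def1; nra.
Qed.

Lemma L_left_deriv_at1 eps : 0 < eps ->
  exists d, 0 < d /\ forall y, 1 - d < y < 1 -> Rabs ((L y - 1) / (y - 1) - p / 2) <= eps.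
Proof.
  intros Heps. destruct (L1_tends_at1 eps Heps) as [d1 [Hd1 Hl]].
  exists (Rmin d1 1). pose proof (Rmin_l d1 1); pose proof (Rmin_r d1 1).
  split; [apply Rmin_pos; lra|]. intros y Hy.
  assert (B : Rabs (1 - L y - p / 2 * (1 - y)) <= eps * (1 - y)).
  { apply (expansion_at1_bound L L1 1 (p / 2) eps (Rmin d1 1) y); auto; try lra.
    - intros x Hx; apply HL1; lra.
    - intros x Hx; left; apply Hl; lra. }
  replace ((L y - 1) / (y - 1) - p / 2) with ((1 - L y - p / 2 * (1 - y)) / (1 - y)) by (field; lra).
  unfold Rdiv. rewrite Rabs_mult, Rabs_inv, (Rabs_right (1 - y)) by lra.
  apply (Rmult_le_reg_r (1 - y)); [lra|]. rewrite Rmult_assoc, Rinv_l by lra. lra.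
Qed.

Lemma weighted_L_tends0 : tends0_at1 (fun s => (1 - s ^ 2) * L s).
Proof.
  destruct L_bounded_near1 as [d0 [Hd0 Hb]].
  apply (tends0_at1_ext (fun s => L s * (1 - s ^ 2))); [|intros; ring].
  apply (tends0_at1_bounded_mult L (fun s => 1 - s ^ 2) 2 d0); [lra | | apply tends0_at1_1_minus_sqr].
  intros; left; apply Hb; auto.
Qed.

Lemma L_pos s : z < s < 1 -> 0 < L s.
Proof.
  intros Hs. destruct (Rlt_or_le 0 (L s)) as [|Hle]; auto. exfalso.
  assert (Hlt : L s < 0) by (destruct Hle; auto; exfalso; apply (Hzmax s); auto).
  destruct (HL_at1 (1 / 2)) as [d [Hd Hd']]; [lra|].
  set (t := (Rmax s (1 - d) + 1) / 2).
  pose proof (Rmax_l s (1 - d)); pose proof (Rmax_r s (1 - d)).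
  assert (Rmax s (1 - d) < 1) by (apply Rmax_lub_lt; lra).
  assert (Lt : 0 < L t).
  { assert (Ht : Rabs (L t - 1) < 1 / 2) by (apply Hd'; unfold t; lra).
    apply Rabs_def2 in Ht. lra. }
  destruct (Ranalysis5.IVT_interv L s t) as [w [Hw Hw0]]; auto; [| unfold t; lra |].
  - intros a Ha. apply derivable_continuous_pt. exists (L1 a). apply HL1. unfold t in *; lra.
  - apply (Hzmax w); auto. unfold t in *; lra.
Qed.

Lemma flux_pos s : z <= s < 1 -> 0 < (1 - s ^ 2) * L1 s.
Proof.
  intros Hs. apply (pos_of_decreasing_tends0 (fun s => (1 - s ^ 2) * L1 s) (fun s => - p * L s)); [lra | | | apply flux_tends0].
  - intros t Ht; apply flux_derive; lra.
  - intros t Ht. assert (0 < L t) by (apply L_pos; lra). nra.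
Qed.

Lemma L1_pos s : z <= s < 1 -> 0 < L1 s.
Proof. intros Hs. pose proof (flux_pos s Hs). assert (0 < 1 - s ^ 2) by nra. nra. Qed.

(* [s (1 - s^2) L' - (1 - s^2) L] has derivative [-(p - 2) s L] and vanishes at [1]; at [s = 0] it equals
   [- L 0], so [z <= 0] would give [L 0 < 0] although [L > 0] on [(z, 1)]. *)
Lemma z_pos : 0 < z.
Proof.
  destruct (Rlt_or_le 0 z) as [|Hz0]; auto. exfalso.
  set (V := fun s => s * ((1 - s ^ 2) * L1 s) - (1 - s ^ 2) * L s).
  assert (HV : 0 < V 0).
  { apply (pos_of_decreasing_tends0 V (fun s => - (p - 2) * s * L s)); [lra | | |].
    - intros t Ht. unfold V. eapply dpl_eq.
      + apply dpl_minus; apply dpl_mult; [apply dpl_id | apply flux_derive | apply dpl_1_minus_sqr | apply HL1];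
          lra.
      + cbv beta. ring.
    - intros t Ht. assert (0 < L t) by (apply L_pos; lra).
      assert (0 < t * L t) by nra. nra.
    - apply (tends0_at1_ext (fun s => s * ((1 - s ^ 2) * L1 s) + -1 * ((1 - s ^ 2) * L s)));
        [|unfold V; intros; ring].
      apply tends0_at1_plus.
      + apply (tends0_at1_bounded_mult (fun s => s) _ 1 1); [lra | | apply flux_tends0].
        intros s Hs; apply Rabs_le; lra.
      + apply (tends0_at1_bounded_mult (fun _ => -1) _ 1 1); [lra | | apply weighted_L_tends0].
        intros s Hs; apply Rabs_le; lra. }
  unfold V in HV. replace (0 * ((1 - 0 ^ 2) * L1 0) - (1 - 0 ^ 2) * L 0) with (- L 0) in HV by ring.
  destruct Hz0 as [Hz0|Hz0].
  - assert (0 < L 0) by (apply L_pos; lra). lra.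
  - subst z. lra.
Qed.

(* [(1 - s^2) (p L - 2 s L')] has derivative [(p - 2) (1 - s^2) L' > 0] on [(z, 1)] and vanishes at [1]. *)
Lemma K_part_neg s : z < s < 1 -> p * L s - 2 * s * L1 s < 0.
Proof.
  intros Hs.
  set (Q := fun s => - (p * ((1 - s ^ 2) * L s) - 2 * s * ((1 - s ^ 2) * L1 s))).
  assert (HQ : 0 < Q s).
  { apply (pos_of_decreasing_tends0 Q (fun s => - ((p - 2) * ((1 - s ^ 2) * L1 s)))); [lra | | |].
    - intros t Ht. unfold Q. eapply dpl_eq.
      + apply dpl_opp, dpl_minus; [apply dpl_scal, dpl_mult; [apply dpl_1_minus_sqr | apply HL1]
                                  | apply dpl_mult; [apply dpl_scal, dpl_id | apply flux_derive]]; lra.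
      + cbv beta. ring.
    - intros t Ht. assert (0 < (1 - t ^ 2) * L1 t) by (apply flux_pos; lra). nra.
    - apply (tends0_at1_ext (fun s => - p * ((1 - s ^ 2) * L s) + 2 * s * ((1 - s ^ 2) * L1 s)));
        [|unfold Q; intros; ring].
      apply tends0_at1_plus.
      + apply (tends0_at1_bounded_mult (fun _ => - p) _ p 1); [lra | | apply weighted_L_tends0].
        intros; rewrite Rabs_Ropp, Rabs_right; lra.
      + apply (tends0_at1_bounded_mult (fun s => 2 * s) _ 2 1); [lra | | apply flux_tends0].
        intros; apply Rabs_le; lra. }
  unfold Q in HQ. assert (0 < 1 - s ^ 2) by nra. nra.
Qed.


Local Notation c := ((1 + z) / (1 - z)).
Local Notation a := (dhc p c z / L1 z).

Lemma gp_ge y : z <= y -> gp p c a z L y = a * L y.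
Proof. intros; unfold gp; destruct (Rle_dec z y); [reflexivity | lra]. Qed.

Lemma gp_lt y : y < z -> gp p c a z L y = hc p c y.
Proof. intros; unfold gp; destruct (Rle_dec z y); [lra | reflexivity]. Qed.

Lemma c_ge1 : 1 <= c.
Proof. pose proof z_pos. apply (Rmult_le_reg_r (1 - z)); [lra|]. field_simplify; lra. Qed.

Lemma a_pos : 0 < a.
Proof. apply Rdiv_lt_0_compat; [apply dhc_pos; lra | apply L1_pos; lra]. Qed.

Definition wronskian s := (1 - s ^ 2) * dhc p c s * L s - hc p c s * ((1 - s ^ 2) * L1 s).

Lemma wronskian_derive s : -1 < s < 1 ->
  derivable_pt_lim wronskian s (Dop p s (hc p c s) (dhc p c s) (d2hc p c s) * L s).
Proof.
  intros Hs. eapply dpl_eq.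
  - apply dpl_minus; apply dpl_mult;
      [apply dpl_mult; [apply dpl_1_minus_sqr | apply dhc_derive] | apply HL1 | apply hc_derive | apply flux_derive];
      lra.
  - unfold Dop. ring.
Qed.

Lemma wronskian_at_z : wronskian z = 0.
Proof. unfold wronskian. rewrite HLz, hc_at_ratio by lra. ring. Qed.

Lemma wronskian_tends0 : tends0_at1 wronskian.
Proof.
  apply (tends0_at1_ext (fun s => dhc p c s * ((1 - s ^ 2) * L s) + - hc p c s * ((1 - s ^ 2) * L1 s)));
    [|unfold wronskian; intros; ring].
  apply tends0_at1_plus.
  - apply (tends0_at1_bounded_mult (dhc p c) _ (p / 2 * (1 + pw c p)) 1); [lra | | apply weighted_L_tends0].
    intros s Hs. apply dhc_bound; lra.
  - apply (tends0_at1_bounded_mult (fun s => - hc p c s) _ (1 + pw c p) 1); [lra | | apply flux_tends0].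
    intros s Hs. rewrite Rabs_Ropp. apply hc_bound; lra.
Qed.

(* [wronskian' = p^2 u v Ehc L] with [L > 0] on [(z, 1)], and [Ehc] is [<= 0] and then [> 0]: the wronskian
   first decreases from [wronskian z = 0], then increases to its limit [0] at [1]. *)
Lemma wronskian_nonpos s0 : z < s0 < 1 -> wronskian s0 <= 0.
Proof.
  intros Hs.
  assert (Hsign : forall x, z < x < 1 -> exists k, 0 < k /\
            Dop p x (hc p c x) (dhc p c x) (d2hc p c x) * L x = k * Ehc p c x).
  { intros x Hx. exists (p ^ 2 * ((1 + x) / 2) * ((1 - x) / 2) * L x). split.
    - pose proof (L_pos x Hx). repeat apply Rmult_lt_0_compat; nra.
    - rewrite Dop_hc by lra. ring. }
  destruct (Rle_or_lt (Ehc p c s0) 0) as [He|He].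
  - destruct (MVT_cor2 wronskian (fun s => Dop p s (hc p c s) (dhc p c s) (d2hc p c s) * L s) z s0)
      as [x [Hx1 Hx2]]; [lra | intros x Hx; apply wronskian_derive; lra|].
    destruct (Hsign x ltac:(lra)) as [k [Hk Hkx]]. rewrite Hkx, wronskian_at_z in Hx1.
    assert (Ehc p c x <= 0) by (apply (Ehc_nonpos_left _ _ x s0); lra).
    assert (k * Ehc p c x <= 0) by nra. nra.
  - assert (0 < - wronskian s0); [|lra].
    apply (pos_of_decreasing_tends0 (fun s => - wronskian s)
             (fun s => - (Dop p s (hc p c s) (dhc p c s) (d2hc p c s) * L s))); [lra | | |].
    + intros t Ht. apply dpl_opp, wronskian_derive. lra.
    + intros t Ht. destruct (Hsign t ltac:(lra)) as [k [Hk ->]].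
      assert (0 < Ehc p c t).
      { destruct (Rle_or_lt (Ehc p c t) 0) as [Ht'|]; auto.
        assert (Ehc p c s0 <= 0) by (apply (Ehc_nonpos_left _ _ s0 t); lra). lra. }
      nra.
    + apply (tends0_at1_ext (fun s => -1 * wronskian s)); [|intros; ring].
      apply (tends0_at1_bounded_mult (fun _ => -1) _ 1 1); [lra | | apply wronskian_tends0].
      intros; apply Rabs_le; lra.
Qed.

Definition gap s := a * L s - hc p c s.

(* [(gap / L)' = - wronskian / ((1 - s^2) L^2) >= 0]. *)
Lemma gap_ratio_nondecreasing t s0 : z < t -> t < s0 < 1 -> gap t / L t <= gap s0 / L s0.
Proof.
  intros Ht Hs.
  set (ratio' := fun s => ((a * L1 s - dhc p c s) * L s - L1 s * gap s) / Rsqr (L s)).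
  destruct (MVT_cor2 (fun s => gap s / L s) ratio' t s0) as [x [Hx1 Hx2]]; [lra| |].
  - intros x Hx. assert (0 < L x) by (apply L_pos; lra).
    apply (derivable_pt_lim_div gap L); [| apply HL1; lra | lra].
    apply dpl_minus; [apply dpl_scal, HL1 | apply hc_derive]; lra.
  - assert (HLx : 0 < L x) by (apply L_pos; lra).
    assert (Hw : wronskian x <= 0) by (apply wronskian_nonpos; lra).
    assert (0 < 1 - x ^ 2) by nra.
    assert (dhc p c x * L x - hc p c x * L1 x <= 0).
    { unfold wronskian in Hw. nra. }
    assert (0 <= ratio' x).
    { unfold ratio', gap, Rdiv. apply Rmult_le_pos; [nra|].
      left; apply Rinv_0_lt_compat. unfold Rsqr; nra. }
    nra.
Qed.

Lemma gap_at_z : gap z = 0.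
Proof. unfold gap. rewrite HLz, hc_at_ratio by lra. ring. Qed.

Lemma gap_derive_at_z : derivable_pt_lim gap z 0.
Proof.
  eapply dpl_eq; [apply dpl_minus; [apply dpl_scal, HL1 | apply hc_derive]; lra|].
  field. apply Rgt_not_eq, L1_pos. lra.
Qed.

(* A negative value [gap s0 = m L s0] would propagate, by monotonicity of [gap / L], to [gap <= m L] on
   [(z, s0)], which near [z] contradicts [gap = o(s - z)] and [L ~ L'(z) (s - z)] with [L'(z) > 0]. *)
Lemma gap_nonneg s0 : z < s0 < 1 -> 0 <= gap s0.
Proof.
  intros Hs0. destruct (Rle_or_lt 0 (gap s0)) as [|Hneg]; auto. exfalso.
  assert (HL1z : 0 < L1 z) by (apply L1_pos; lra).
  assert (HLs0 : 0 < L s0) by (apply L_pos; lra).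
  set (m := gap s0 / L s0).
  assert (Hm : m < 0) by (apply Rdiv_neg_pos; auto).
  set (e1 := - m * L1 z / 4).
  assert (He1 : 0 < e1) by (unfold e1; nra).
  destruct (gap_derive_at_z e1 He1) as [d1 Hd1].
  destruct (HL1 z Hz (L1 z / 2) ltac:(lra)) as [d2 Hd2].
  pose proof (cond_pos d1); pose proof (cond_pos d2).
  set (h := Rmin (Rmin d1 d2) (s0 - z) / 2).
  pose proof (Rmin_l (Rmin d1 d2) (s0 - z)); pose proof (Rmin_r (Rmin d1 d2) (s0 - z)).
  pose proof (Rmin_l d1 d2); pose proof (Rmin_r d1 d2).
  assert (Hh : 0 < h) by (unfold h; apply Rdiv_lt_0_compat; [repeat apply Rmin_pos|]; lra).
  assert (Hh1 : h < d1) by (unfold h; lra). assert (Hh2 : h < d2) by (unfold h; lra).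
  assert (Hh3 : h < s0 - z) by (unfold h; lra).
  assert (Habs : Rabs h = h) by (apply Rabs_right; lra).
  specialize (Hd1 h ltac:(lra) ltac:(lra)). specialize (Hd2 h ltac:(lra) ltac:(lra)).
  rewrite gap_at_z in Hd1. rewrite HLz in Hd2.
  apply Rabs_def2 in Hd1. apply Rabs_def2 in Hd2.
  replace ((gap (z + h) - 0) / h - 0) with (gap (z + h) / h) in Hd1 by (field; lra).
  replace ((L (z + h) - 0) / h - L1 z) with (L (z + h) / h - L1 z) in Hd2 by (field; lra).
  assert (A1 : - e1 * h < gap (z + h)).
  { assert (Hq : gap (z + h) / h * h = gap (z + h)) by (field; lra). nra. }
  assert (A2 : L1 z / 2 * h < L (z + h)).
  { assert (Hq : L (z + h) / h * h = L (z + h)) by (field; lra). nra. }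
  assert (HLh : 0 < L (z + h)) by nra.
  assert (Hmono : gap (z + h) <= m * L (z + h)).
  { pose proof (gap_ratio_nondecreasing (z + h) s0 ltac:(lra) ltac:(lra)) as Hr.
    fold m in Hr. apply (Rmult_le_compat_r (L (z + h))) in Hr; [|lra].
    unfold Rdiv in Hr. rewrite Rmult_assoc, Rinv_l in Hr by lra. lra. }
  assert (m * L (z + h) < m * (L1 z / 2 * h)) by (apply Rmult_lt_gt_compat_neg_l; lra).
  assert (m * (L1 z / 2 * h) = - 2 * e1 * h) by (unfold e1; field).
  nra.
Qed.

Lemma a_ge1 : 1 <= a.
Proof.
  apply Rle_plus_epsilon. intros e He.
  assert (Ha : 0 < Rabs a + 1) by (pose proof (Rabs_pos a); lra).
  destruct (HL_at1 (e / (2 * (Rabs a + 1)))) as [d1 [Hd1 Hd1']]; [apply Rdiv_lt_0_compat; lra|].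
  destruct (hc_tends1_at1 p c ltac:(lra) (e / 2)) as [d2 [Hd2 Hd2']]; [lra|].
  set (t0 := Rmax z (Rmax (1 - d1) (1 - d2))).
  pose proof (Rmax_l z (Rmax (1 - d1) (1 - d2))); pose proof (Rmax_r z (Rmax (1 - d1) (1 - d2))).
  pose proof (Rmax_l (1 - d1) (1 - d2)); pose proof (Rmax_r (1 - d1) (1 - d2)).
  assert (t0 < 1) by (unfold t0; repeat apply Rmax_lub_lt; lra).
  set (t := (t0 + 1) / 2).
  assert (G : 0 <= gap t) by (apply gap_nonneg; unfold t, t0 in *; lra).
  assert (A : Rabs (L t - 1) < e / (2 * (Rabs a + 1))) by (apply Hd1'; unfold t, t0 in *; lra).
  assert (B : Rabs (hc p c t - 1) < e / 2) by (apply Hd2'; unfold t, t0 in *; lra).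
  assert (C : Rabs (a * (L t - 1)) < e / 2).
  { apply Rabs_mult_lt_bound with (Rabs a); [apply Rabs_pos | lra | lra |].
    replace (e / 2 / (Rabs a + 1)) with (e / (2 * (Rabs a + 1))) by (field; lra). exact A. }
  apply Rabs_def2 in B. apply Rabs_def2 in C. unfold gap in G. lra.
Qed.

Lemma gp_ge_hc s : -1 <= s <= 1 -> gp p c a z L s >= hc p c s.
Proof.
  intros Hs. unfold gp. destruct (Rle_dec z s) as [Hzs|]; [|lra].
  destruct (Req_dec s 1) as [->|Hs1].
  - rewrite HL1eq, hc_at1. pose proof a_ge1. lra.
  - destruct (Req_dec s z) as [->|Hsz].
    + rewrite HLz, hc_at_ratio by lra. lra.
    + pose proof (gap_nonneg s ltac:(lra)). unfold gap in *. lra.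
Qed.

(** * The glued function [g] *)

Local Notation g := (gp p c a z L).

Lemma Dop_aL s : -1 < s < 1 -> Dop p s (a * L s) (a * L1 s) (a * L2 s) = 0.
Proof.
  intros Hs. unfold Dop.
  replace ((1 - s ^ 2) * (a * L2 s) - 2 * s * (a * L1 s) + p * (a * L s))
    with (a * ((1 - s ^ 2) * L2 s - 2 * s * L1 s + p * L s)) by ring.
  rewrite Hode by exact Hs. ring.
Qed.

Lemma Kop_aL_neg s : z < s < 1 -> Kop p s (a * L s) (a * L1 s) (a * L2 s) < 0.
Proof.
  intros Hs. unfold Kop.
  replace (p * (p - 1) * (a * L s) - 2 * (p - 1) * s * (a * L1 s) - (1 - s ^ 2) * (a * L2 s))
    with (a * p * (p * L s - 2 * s * L1 s) - a * ((1 - s ^ 2) * L2 s - 2 * s * L1 s + p * L s)) by ring.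
  rewrite Hode by lra. pose proof (K_part_neg s Hs). pose proof a_pos.
  assert (0 < a * p) by nra. nra.
Qed.

Lemma Dop_hc_left s : -1 < s <= z -> Dop p s (hc p c s) (dhc p c s) (d2hc p c s) <= 0.
Proof.
  intros Hs. rewrite Dop_hc by lra.
  assert (Ehc p c s <= 0).
  { apply Ehc_nonpos; [apply c_ge1 | lra | lra |].
    apply (Rmult_le_reg_r ((1 - s) * (1 - z))); [nra|].
    replace ((1 + s) / (1 - s) * ((1 - s) * (1 - z))) with ((1 + s) * (1 - z)) by (field; lra).
    replace ((1 + z) / (1 - z) * ((1 - s) * (1 - z))) with ((1 + z) * (1 - s)) by (field; lra). nra. }
  assert (0 < p ^ 2 * ((1 + s) / 2) * ((1 - s) / 2)) by (repeat apply Rmult_lt_0_compat; nra).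
  nra.
Qed.

Lemma gp_local s : -1 < s < 1 -> s <> z ->
  exists lo hi (G1 G2 : R -> R), lo < s < hi /\
    (forall y, lo < y < hi -> derivable_pt_lim g y (G1 y) /\ derivable_pt_lim G1 y (G2 y)) /\
    Dop p s (g s) (G1 s) (G2 s) <= 0 /\ Kop p s (g s) (G1 s) (G2 s) <= 0 /\ 0 <= G1 s.
Proof.
  intros Hs Hsz. pose proof a_pos.
  destruct (Rlt_or_le z s) as [Hzs|Hsz'].
  - exists z, 1, (fun y => a * L1 y), (fun y => a * L2 y). split; [lra|].
    rewrite (gp_ge s) by lra.
    split; [|split; [|split]].
    + intros y Hy. split; [|apply dpl_scal, HL2; lra].
      apply (dpl_local (fun y => a * L y) _ _ _ (y - z)); [lra | | apply dpl_scal, HL1; lra].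
      intros y' Hy'. apply Rabs_def2 in Hy'. rewrite gp_ge by lra. reflexivity.
    + rewrite Dop_aL by lra. lra.
    + pose proof (Kop_aL_neg s ltac:(lra)). lra.
    + pose proof (L1_pos s ltac:(lra)). nra.
  - exists (-1), z, (dhc p c), (d2hc p c). split; [lra|].
    rewrite (gp_lt s) by lra.
    split; [|split; [|split]].
    + intros y Hy. split; [|apply dhc_derive; lra].
      apply (dpl_local (hc p c) _ _ _ (z - y)); [lra | | apply hc_derive; lra].
      intros y' Hy'. apply Rabs_def2 in Hy'. rewrite gp_lt by lra. reflexivity.
    + apply Dop_hc_left. lra.
    + rewrite Kop_hc by lra. lra.
    + left; apply dhc_pos; lra.
Qed.

Lemma gp_operators_nonpos s : -1 < s < 1 -> s <> z ->
  exists d1 d2, twice_deriv_at g s d1 d2 /\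
    Dop p s (g s) d1 d2 <= 0 /\ Dop p s (g s) d1 d2 / (1 - s ^ 2) + Kop p s (g s) d1 d2 <= 0.
Proof.
  intros Hs Hsz. destruct (gp_local s Hs Hsz) as [lo [hi [G1 [G2 [Hlh [Hd [HD [HK _]]]]]]]].
  exists (G1 s), (G2 s). split; [|split; auto].
  - exists G1, (Rmin (s - lo) (hi - s)). pose proof (Rmin_l (s - lo) (hi - s)); pose proof (Rmin_r (s - lo) (hi - s)).
    split; [apply Rmin_pos; lra|]. split; [|split; [reflexivity | apply Hd; lra]].
    intros y Hy. apply Rabs_def2 in Hy. apply Hd. lra.
  - assert (0 < 1 - s ^ 2) by nra.
    assert (Dop p s (g s) (G1 s) (G2 s) / (1 - s ^ 2) <= 0).
    { unfold Rdiv. assert (0 < / (1 - s ^ 2)) by (apply Rinv_0_lt_compat; lra). nra. }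
    lra.
Qed.

Local Notation I := (fun y => -1 <= y <= 1).

(* [L1 1] is unconstrained, so the value at [1] is the one-sided limit [a L'(1^-) = a p / 2]. *)
Definition dgp y := if Rle_dec z y then (if Req_EM_T y 1 then a * (p / 2) else a * L1 y) else dhc p c y.

Lemma dgp_lt y : y < z -> dgp y = dhc p c y.
Proof. intros; unfold dgp; destruct (Rle_dec z y); [lra | reflexivity]. Qed.

Lemma dgp_mid y : z <= y < 1 -> dgp y = a * L1 y.
Proof. intros; unfold dgp; destruct (Rle_dec z y); [|lra]. destruct (Req_EM_T y 1); [lra | reflexivity]. Qed.

Lemma dgp_1 : dgp 1 = a * (p / 2).
Proof. unfold dgp; destruct (Rle_dec z 1); [|lra]. destruct (Req_EM_T 1 1); [reflexivity | lra]. Qed.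

Lemma a_L1_z : a * L1 z = dhc p c z.
Proof. field. apply Rgt_not_eq, L1_pos. lra. Qed.

Lemma gp_deriv_within_at1 : deriv_within I g 1 (a * (p / 2)).
Proof.
  apply (deriv_within_local I (fun y => a * L y) _ _ _ (1 - z)); [lra | lra | |].
  { intros y Dy Hy. apply Rabs_def2 in Hy. rewrite gp_ge by lra. reflexivity. }
  apply deriv_within_scal; [apply a_pos|]. intros eps He.
  destruct (L_left_deriv_at1 (eps / 2) ltac:(lra)) as [d [Hd Hd']].
  exists d. split; auto. intros y Dy Hy1 Hy. apply Rabs_def2 in Hy.
  rewrite HL1eq. eapply Rle_lt_trans; [apply Hd'; lra | lra].
Qed.

Lemma dgp_cont_within_at1 : cont_within I dgp 1.
Proof.
  intros eps He. pose proof a_pos.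
  destruct (L1_tends_at1 (eps / (a + 1))) as [d [Hd Hd']]; [apply Rdiv_lt_0_compat; lra|].
  exists (Rmin d (1 - z)). pose proof (Rmin_l d (1 - z)); pose proof (Rmin_r d (1 - z)).
  split; [apply Rmin_pos; lra|]. intros y Dy Hy. apply Rabs_def2 in Hy.
  rewrite dgp_1. destruct (Req_dec y 1) as [->|Hy1].
  - rewrite dgp_1, Rminus_diag, Rabs_R0. lra.
  - rewrite dgp_mid by lra. replace (a * L1 y - a * (p / 2)) with (a * (L1 y - p / 2)) by ring.
    apply Rabs_mult_lt_bound with a; [lra | lra | rewrite Rabs_right; lra | apply Hd'; lra].
Qed.

Lemma gp_deriv_within_at_z : deriv_within I g z (dgp z).
Proof.
  rewrite dgp_mid by lra. apply deriv_within_split.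
  - rewrite a_L1_z. apply (deriv_within_local _ (hc p c) _ _ _ 1); [lra | split; lra | |].
    + intros y [Dy Hy] _. destruct (Req_dec y z) as [->|].
      * rewrite gp_ge, HLz, hc_at_ratio by lra. ring.
      * rewrite gp_lt by lra. reflexivity.
    + apply deriv_within_of_dpl, hc_derive. lra.
  - apply (deriv_within_local _ (fun y => a * L y) _ _ _ 1); [lra | split; lra | |].
    + intros y [Dy Hy] _. rewrite gp_ge by lra. reflexivity.
    + apply deriv_within_of_dpl, dpl_scal, HL1. lra.
Qed.

Lemma dgp_cont_within_at_z : cont_within I dgp z.
Proof.
  apply cont_within_split.
  - apply (cont_within_local _ (dhc p c) _ _ 1); [lra | split; lra | |].
    + intros y [Dy Hy] _. destruct (Req_dec y z) as [->|].
      * rewrite dgp_mid, a_L1_z by lra. reflexivity.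
      * rewrite dgp_lt by lra. reflexivity.
    + apply (cont_within_of_dpl _ _ _ (d2hc p c z)), dhc_derive. lra.
  - apply (cont_within_local _ (fun y => a * L1 y) _ _ (1 - z)); [lra | split; lra | |].
    + intros y [Dy Hy] Hy'. apply Rabs_def2 in Hy'. rewrite dgp_mid by lra. reflexivity.
    + apply (cont_within_of_dpl _ _ _ (a * L2 z)), dpl_scal, HL2. lra.
Qed.

Lemma gp_C1 : C1_on (-1) 1 g.
Proof.
  pose proof z_pos as Hz0. exists dgp. split; intros x Hx.
  - destruct (Rlt_or_le x z) as [Hxz|Hzx]; [destruct (Req_dec x (-1)) as [->|Hx1] |].
    + rewrite dgp_lt by lra. apply (deriv_within_local I (hc p c) _ _ _ (z + 1)); [lra | lra | |].
      * intros y Dy Hy. apply Rabs_def2 in Hy. rewrite gp_lt by lra. reflexivity.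
      * apply hc_deriv_within_atm1. lra.
    + rewrite dgp_lt by lra. apply (deriv_within_local I (hc p c) _ _ _ (Rmin (x + 1) (z - x)));
        [apply Rmin_pos; lra | lra | |].
      * intros y Dy Hy. pose proof (Rmin_r (x + 1) (z - x)). apply Rabs_def2 in Hy.
        rewrite gp_lt by lra. reflexivity.
      * apply deriv_within_of_dpl, hc_derive. lra.
    + destruct (Req_dec x z) as [->|Hxz]; [apply gp_deriv_within_at_z|].
      destruct (Req_dec x 1) as [->|Hx1]; [rewrite dgp_1; apply gp_deriv_within_at1|].
      rewrite dgp_mid by lra. apply (deriv_within_local I (fun y => a * L y) _ _ _ (x - z)); [lra | lra | |].
      * intros y Dy Hy. apply Rabs_def2 in Hy. rewrite gp_ge by lra. reflexivity.
      * apply deriv_within_of_dpl, dpl_scal, HL1. lra.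
  - destruct (Rlt_or_le x z) as [Hxz|Hzx]; [destruct (Req_dec x (-1)) as [->|Hx1] |].
    + apply (cont_within_local I (dhc p c) _ _ (z + 1)); [lra | lra | |].
      * intros y Dy Hy. apply Rabs_def2 in Hy. rewrite dgp_lt by lra. reflexivity.
      * apply dhc_cont_within_atm1. lra.
    + apply (cont_within_local I (dhc p c) _ _ (Rmin (x + 1) (z - x))); [apply Rmin_pos; lra | lra | |].
      * intros y Dy Hy. pose proof (Rmin_r (x + 1) (z - x)). apply Rabs_def2 in Hy.
        rewrite dgp_lt by lra. reflexivity.
      * apply (cont_within_of_dpl _ _ _ (d2hc p c x)), dhc_derive. lra.
    + destruct (Req_dec x z) as [->|Hxz]; [apply dgp_cont_within_at_z|].
      destruct (Req_dec x 1) as [->|Hx1]; [apply dgp_cont_within_at1|].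
      apply (cont_within_local I (fun y => a * L1 y) _ _ (Rmin (x - z) (1 - x))); [apply Rmin_pos; lra | lra | |].
      * intros y Dy Hy. pose proof (Rmin_l (x - z) (1 - x)); pose proof (Rmin_r (x - z) (1 - x)).
        apply Rabs_def2 in Hy. rewrite dgp_mid by lra. reflexivity.
      * apply (cont_within_of_dpl _ _ _ (a * L2 x)), dpl_scal, HL2. lra.
Qed.

Lemma phi_gp_hessian_nonpos x y : 0 < x -> 0 < y -> (y - x) / (x + y) <> z ->
  exists fx fy fxx fxy fyy,
    second_partials (phi p g) x y fx fy fxx fxy fyy /\
    forall h1 h2 k1 k2 : R,
      k1 ^ 2 + k2 ^ 2 <= h1 ^ 2 + h2 ^ 2 ->
      (fx / x + fxx) * (h1 ^ 2 + h2 ^ 2) + 2 * fxy * (h1 * k1 + h2 * k2)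
        + (fyy + fy / y) * (k1 ^ 2 + k2 ^ 2) <= 0.
Proof.
  intros Hx Hy Hsz.
  assert (Hs : -1 < (y - x) / (x + y) < 1) by (split; apply (Rmult_lt_reg_r (x + y)); try lra; field_simplify; lra).
  destruct (gp_local _ Hs Hsz) as [lo [hi [G1 [G2 [Hlh [Hd [HD [HK HG1]]]]]]]].
  do 5 eexists. split.
  - apply (phi_second_partials p g G1 G2 lo hi Hd x y Hx Hy Hlh).
  - apply (phi_hessian_form_nonpos p g G1 G2 x y Hx Hy); auto. lra.
Qed.

End Legendre.

Theorem mainTheorem10
  (alpha p : R) (L L1 L2 : R -> R) (z hz : R)
  (Hp : p = alpha * (alpha + 1)) (Hp2 : 2 < p)
  (* L = L_alpha: solution on (-1,1) of the Legendre equation, L1 = L', L2 = L'' *)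
  (HL1 : forall s, -1 < s < 1 -> derivable_pt_lim L s (L1 s))
  (HL2 : forall s, -1 < s < 1 -> derivable_pt_lim L1 s (L2 s))
  (HODE : forall s, -1 < s < 1 ->
            (1 - s ^ 2) * L2 s - 2 * s * L1 s + alpha * (alpha + 1) * L s = 0)
  (* bounded near 1, with L(1) = 1 (as the value of the continuous extension) *)
  (Hbdd : exists M delta, 0 < delta /\ forall s, 1 - delta < s < 1 -> Rabs (L s) <= M)
  (Hlim : forall eps, 0 < eps -> exists delta, 0 < delta /\
            forall s, 1 - delta < s < 1 -> Rabs (L s - 1) < eps)
  (HL1eq : L 1 = 1)
  (* z = z_p: the largest zero of L in (-1,1) *)
  (Hz : -1 < z < 1) (HLz : L z = 0)
  (Hzmax : forall s, z < s < 1 -> L s <> 0)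
  (* hz = h_{c_p}'(z_p) *)
  (Hhz : derivable_pt_lim (hc p ((1 + z) / (1 - z))) z hz) :
  let c := (1 + z) / (1 - z) in
  let a := hz / L1 z in
  let g := gp p c a z L in
  C1_on (-1) 1 g /\
  (forall s, -1 <= s <= 1 -> g s >= hc p c s) /\
  (forall s, -1 < s < 1 -> s <> z ->
     exists d1 d2, twice_deriv_at g s d1 d2 /\
       Dop p s (g s) d1 d2 <= 0 /\
       Dop p s (g s) d1 d2 / (1 - s ^ 2) + Kop p s (g s) d1 d2 <= 0) /\
  (forall x y, 0 <= x -> 0 <= y -> (x, y) <> (0, 0) ->
     phi p g x y >= pw y p - pw c p * pw x p) /\
  (forall x y, 0 < x -> 0 < y -> (y - x) / (x + y) <> z ->
     exists fx fy fxx fxy fyy,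
       second_partials (phi p g) x y fx fy fxx fxy fyy /\
       forall h1 h2 k1 k2 : R,
         k1 ^ 2 + k2 ^ 2 <= h1 ^ 2 + h2 ^ 2 ->
         (fx / x + fxx) * (h1 ^ 2 + h2 ^ 2) + 2 * fxy * (h1 * k1 + h2 * k2)
           + (fyy + fy / y) * (k1 ^ 2 + k2 ^ 2) <= 0).
Proof.
  intros c a g.
  assert (Hode : forall s, -1 < s < 1 -> (1 - s ^ 2) * L2 s - 2 * s * L1 s + p * L s = 0)
    by (rewrite Hp; exact HODE).
  assert (HL_at1 : tends0_at1 (fun s => L s - 1)) by exact Hlim.
  assert (Hhz_eq : hz = dhc p c z) by (apply (uniqueness_limite _ _ _ _ Hhz), hc_derive; lra).
  unfold g, a. rewrite Hhz_eq.
  split; [|split; [|split; [|split]]].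
  - exact (gp_C1 p z L L1 L2 Hp2 HL1 HL2 Hode HL_at1 Hz HLz HL1eq Hzmax).
  - exact (gp_ge_hc p z L L1 L2 Hp2 HL1 HL2 Hode HL_at1 Hz HLz HL1eq Hzmax).
  - exact (gp_operators_nonpos p z L L1 L2 Hp2 HL1 HL2 Hode HL_at1 Hz HLz Hzmax).
  - apply phi_ge_of_ge_hc, (gp_ge_hc p z L L1 L2 Hp2 HL1 HL2 Hode HL_at1 Hz HLz HL1eq Hzmax).
  - exact (phi_gp_hessian_nonpos p z L L1 L2 Hp2 HL1 HL2 Hode HL_at1 Hz HLz Hzmax).
Qed.
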